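(* Let $(V,m)$ be a discrete measure space and $(b,c)$ a graph over $(V,m)$. If $Q^{(N)}\neq Q^{(D)}$, then there exists a non-negative function $u\in D(Q^{(N)})\cap\ell^\infty(V)$, $u\not\equiv 0$, with $(\widetilde L+1)u=0$.
   Context: $V$ is a finite or countably infinite set and $m:V\to(0,\infty)$; $(V,m)$ is a discrete measure space. $C(V)$ is the set of all functions $V\to\mathbb C$, $C_c(V)$ the finitely supported ones, and $\ell^2(V,m)$ carries $\langle u,v\rangle=\sum_x u(x)\overline{v(x)}m(x)$. A graph over $(V,m)$ is a pair $(b,c)$ with $c:V\to[0,\infty)$, $b:V\times V\to[0,\infty)$, $b(x,x)=0$, $b(x,y)=b(y,x)$, $\sum_y b(x,y)<\infty$. Let $\widetilde F=\{u\in C(V):\sum_y|b(x,y)u(y)|<\infty\ \forall x\}$ and $\widetilde L u(x)=\frac{1}{m(x)}\sum_y b(x,y)(u(x)-u(y))+\frac{c(x)}{m(x)}u(x)$ for $u\in\widetilde F$. $Q^{(N)}$ is the form on $\ell^2(V,m)$ with domain $D(Q^{(N)})=\{u\in\ell^2(V,m):\frac12\sum_{x,y}b(x,y)|u(x)-u(y)|^2+\sum_x c(x)|u(x)|^2<\infty\}$ and $Q^{(N)}(u,v)=\frac12\sum_{x,y}b(x,y)(u(x)-u(y))\overline{(v(x)-v(y))}+\sum_x c(x)u(x)\overline{v(x)}$; it is non-negative, symmetric and closed, and $D(Q^{(N)})\subseteq\widetilde F$. $Q^{(D)}$ is the closure of the restriction of $Q^{(N)}$ to $C_c(V)$. Two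 forms are equal if they have the same domain and agree on it. *)

From Stdlib Require Import Reals Lra List ClassicalEpsilon.
Import ListNotations.
Open Scope R_scope.
Set Implicit Arguments.

Definition C := (R * R)%type.
Definition Cof (r : R) : C := (r, 0).
Definition C0 : C := (0, 0).
Definition Cadd (z w : C) : C := (fst z + fst w, snd z + snd w).
Definition Csub (z w : C) : C := (fst z - fst w, snd z - snd w).
Definition Cmul (z w : C) : C :=
  (fst z * fst w - snd z * snd w, fst z * snd w + snd z * fst w).
Definition Cconj (z : C) : C := (fst z, - snd z).
Definition Cscal (r : R) (z : C) : C := (r * fst z, r * snd z).
Definition Cnorm2 (z : C) : R := fst z * fst z + snd z * snd z.

Fixpoint sum_list {T : Type} (f : T -> R) (l : list T) : R :=
  match l with [] => 0 | x :: l' => f x + sum_list f l' end.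

Definition has_sum {T : Type} (f : T -> R) (s : R) : Prop :=
  forall eps, eps > 0 -> exists l0 : list T,
    forall l, NoDup l -> incl l0 l -> Rabs (sum_list f l - s) < eps.

Definition summable {T : Type} (f : T -> R) : Prop := exists s, has_sum f s.

(* the sum (0 if the family is not summable) *)
Definition tsum {T : Type} (f : T -> R) : R :=
  epsilon (inhabits 0) (fun s => has_sum f s).

Definition summableC {T : Type} (f : T -> C) : Prop :=
  summable (fun x => fst (f x)) /\ summable (fun x => snd (f x)).
Definition abs_summableC {T : Type} (f : T -> C) : Prop :=
  summable (fun x => sqrt (Cnorm2 (f x))).
Definition tsumC {T : Type} (f : T -> C) : C :=
  (tsum (fun x => fst (f x)), tsum (fun x => snd (f x))).

Definition countable (V : Type) : Prop :=
  exists f : V -> nat, forall x y, f x = f y -> x = y.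

Definition measure_space (V : Type) (m : V -> R) : Prop :=
  countable V /\ forall x, 0 < m x.

Definition is_graph (V : Type) (b : V -> V -> R) (c : V -> R) : Prop :=
  (forall x, 0 <= c x) /\
  (forall x y, 0 <= b x y) /\
  (forall x, b x x = 0) /\
  (forall x y, b x y = b y x) /\
  (forall x, summable (fun y => b x y)).

Definition fsub {V : Type} (u v : V -> C) : V -> C := fun x => Csub (u x) (v x).

Definition finsupp {V : Type} (u : V -> C) : Prop :=
  exists l : list V, forall x, u x <> C0 -> In x l.

Definition l2 {V : Type} (m : V -> R) (u : V -> C) : Prop :=
  summable (fun x => Cnorm2 (u x) * m x).
Definition l2norm2 {V : Type} (m : V -> R) (u : V -> C) : R :=
  tsum (fun x => Cnorm2 (u x) * m x).

Definition linfty {V : Type} (u : V -> C) : Prop :=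
  exists M, forall x, Cnorm2 (u x) <= M.

Record form (V : Type) := mkForm {
  fdom : (V -> C) -> Prop;
  fval : (V -> C) -> (V -> C) -> C }.

Definition form_eq {V : Type} (F G : form V) : Prop :=
  (forall u, fdom F u <-> fdom G u) /\
  (forall u v, fdom F u -> fdom F v -> fval F u v = fval G u v).

Definition QN_dom {V : Type} (m : V -> R) (b : V -> V -> R) (c : V -> R)
  (u : V -> C) : Prop :=
  l2 m u /\
  summable (fun p : V * V => b (fst p) (snd p) * Cnorm2 (Csub (u (fst p)) (u (snd p)))) /\
  summable (fun x => c x * Cnorm2 (u x)).

Definition QN_val {V : Type} (b : V -> V -> R) (c : V -> R)
  (u v : V -> C) : C :=
  Cadd
    (Cscal (1/2) (tsumC (fun p : V * V =>
        Cscal (b (fst p) (snd p))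
          (Cmul (Csub (u (fst p)) (u (snd p)))
                (Cconj (Csub (v (fst p)) (v (snd p))))))))
    (tsumC (fun x => Cscal (c x) (Cmul (u x) (Cconj (v x))))).

Definition QN {V : Type} (m : V -> R) (b : V -> V -> R) (c : V -> R) : form V :=
  mkForm (QN_dom m b c) (QN_val b c).

Definition restrict_Cc {V : Type} (F : form V) : form V :=
  mkForm (fun u => finsupp u /\ fdom F u) (fval F).

(** Closure of a (closable) form on l^2(V,m):
    u is in the domain iff there is a sequence u_n in the domain of F with
    u_n -> u in l^2(V,m) and u_n Cauchy w.r.t. F; the value is the limit
    of F(u_n, v_n) along such approximating sequences. *)
Definition approx {V : Type} (m : V -> R) (F : form V)
  (un : nat -> V -> C) (u : V -> C) : Prop :=
  (forall n, fdom F (un n)) /\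
  (forall n, l2 m (fsub (un n) u)) /\
  Un_cv (fun n => l2norm2 m (fsub (un n) u)) 0 /\
  (forall eps, eps > 0 -> exists N, forall n k, (n >= N)%nat -> (k >= N)%nat ->
     Cnorm2 (fval F (fsub (un n) (un k)) (fsub (un n) (un k))) < eps).

Definition closure_form {V : Type} (m : V -> R) (F : form V) : form V :=
  mkForm
    (fun u => l2 m u /\ exists un, approx m F un u)
    (fun u v => epsilon (inhabits C0) (fun z =>
       forall un vn, approx m F un u -> approx m F vn v ->
         Un_cv (fun n => Cnorm2 (Csub (fval F (un n) (vn n)) z)) 0)).

Definition QD {V : Type} (m : V -> R) (b : V -> V -> R) (c : V -> R) : form V :=
  closure_form m (restrict_Cc (QN m b c)).

Definition Ftilde {V : Type} (b : V -> V -> R) (u : V -> C) : Prop :=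
  forall x, abs_summableC (fun y => Cscal (b x y) (u y)).

Definition Ltilde {V : Type} (m : V -> R) (b : V -> V -> R) (c : V -> R)
  (u : V -> C) (x : V) : C :=
  Cadd (Cscal (/ m x) (tsumC (fun y => Cscal (b x y) (Csub (u x) (u y)))))
       (Cscal (c x / m x) (u x)).

From Pilot Require Import Defs.
From Stdlib Require Import Reals Lra Lia List Permutation Classical ClassicalEpsilon FunctionalExtensionality.
Import ListNotations.
Open Scope R_scope.

(* Write [evec m b c f] for the family indexed by [V + (V + V * V)] whose square norm is
   ||f||^2 + Q(f) for real [f]; both forms are then described componentwise on real and
   imaginary parts.  If Q^(N) and Q^(D) differ, some real f in D(Q^(N)) lies outside
   D(Q^(D)); normal contractions (positive part, truncation at height n) preserve D(Q^(N)),
   and D(Q^(D)) is closed, so f may be taken with 0 <= f <= M.  Minimizing ||w||^2 + Q(w)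
   over w in f + C_c(V) yields, by the parallelogram law and Fatou's lemma, a pointwise limit
   v of a minimizing sequence: the component of f orthogonal to D(Q^(D)).  Clamping shows
   0 <= v <= M, v <> 0 since otherwise f would lie in D(Q^(D)), and varying v along a Dirac
   mass gives (Ltilde + 1) v = 0. *)

(** * Unconditional sums *)

Lemma sum_list_app {T} (f : T -> R) l1 l2 : sum_list f (l1 ++ l2) = sum_list f l1 + sum_list f l2.
Proof. induction l1; simpl; [lra| rewrite IHl1; lra]. Qed.

Lemma sum_list_perm {T} (f:T->R) l l' : Permutation l l' -> sum_list f l = sum_list f l'.
Proof. induction 1; simpl; lra. Qed.

Lemma sum_list_plus {T} (f g:T->R) l : sum_list (fun x => f x + g x) l = sum_list f l + sum_list g l.
Proof. induction l; simpl; lra. Qed.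

Lemma sum_list_scal {T} (f:T->R) k l : sum_list (fun x => k * f x) l = k * sum_list f l.
Proof. induction l; simpl; [lra|rewrite IHl; ring]. Qed.

Lemma sum_list_nonneg {T} (f:T->R) l : (forall x, 0 <= f x) -> 0 <= sum_list f l.
Proof. intros H; induction l; simpl; [lra| specialize (H a); lra]. Qed.

Lemma sum_list_le {T} (f g:T->R) l : (forall x, f x <= g x) -> sum_list f l <= sum_list g l.
Proof. intros H; induction l; simpl; [lra| specialize (H a); lra]. Qed.

Definition inb {T} (l : list T) (x:T) : bool :=
  if excluded_middle_informative (In x l) then true else false.

Lemma inb_spec {T} (l : list T) x : inb l x = true <-> In x l.
Proof. unfold inb; destruct excluded_middle_informative; split; intuition; discriminate. Qed.

Lemma sum_list_filter {T} (f:T->R) (P: T->bool) l :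
  sum_list f l = sum_list f (filter P l) + sum_list f (filter (fun x => negb (P x)) l).
Proof. induction l; simpl; [lra|]. destruct (P a); simpl; lra. Qed.

Lemma sum_list_incl_split {T} (f:T->R) l0 l : NoDup l0 -> NoDup l -> incl l0 l ->
  sum_list f l = sum_list f l0 + sum_list f (filter (fun x => negb (inb l0 x)) l).
Proof.
  intros H0 H1 H2. rewrite (sum_list_filter f (inb l0) l). f_equal.
  apply sum_list_perm. apply NoDup_Permutation; [apply NoDup_filter; auto | auto |].
  intro x; rewrite filter_In, inb_spec; split; intuition.
Qed.

Lemma sum_list_incl_le {T} (f:T->R) l0 l : (forall x, 0 <= f x) -> NoDup l0 -> NoDup l -> incl l0 l ->
  sum_list f l0 <= sum_list f l.
Proof.
  intros Hf H0 H1 H2. rewrite (sum_list_incl_split f l0 l); auto.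
  pose proof (sum_list_nonneg f (filter (fun x => negb (inb l0 x)) l) Hf). lra.
Qed.

Lemma exists_NoDup_equiv {T} (l : list T) : exists l', NoDup l' /\ forall x, In x l <-> In x l'.
Proof.
  induction l as [|a l [l' [H1 H2]]].
  - exists []; split; [constructor| tauto].
  - destruct (classic (In a l')).
    + exists l'; split; auto; intro x; simpl; rewrite H2; split; intuition; subst; auto.
    + exists (a::l'); split; [constructor; auto|]. intro x; simpl; rewrite H2; tauto.
Qed.

Lemma has_sum_unique {T} (f:T->R) s s' : has_sum f s -> has_sum f s' -> s = s'.
Proof.
  intros H H'. destruct (Req_dec s s') as [|Hne]; auto. exfalso.
  assert (He : Rabs (s - s') / 2 > 0).
  { apply Rdiv_lt_0_compat; [apply Rabs_pos_lt; lra| lra]. }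
  destruct (H _ He) as [l0 Hl0]. destruct (H' _ He) as [l0' Hl0'].
  destruct (exists_NoDup_equiv (l0 ++ l0')) as [l [Hn Hi]].
  assert (A1 := Hl0 l Hn (fun x h => proj1 (Hi x) (in_or_app _ _ _ (or_introl h)))).
  assert (A2 := Hl0' l Hn (fun x h => proj1 (Hi x) (in_or_app _ _ _ (or_intror h)))).
  assert (Rabs (s - s') <= Rabs (sum_list f l - s) + Rabs (sum_list f l - s')).
  { replace (s - s') with (-(sum_list f l - s) + (sum_list f l - s')) by ring.
    eapply Rle_trans; [apply Rabs_triang|]. rewrite Rabs_Ropp; lra. }
  lra.
Qed.

Lemma tsum_eq {T} (f:T->R) s : has_sum f s -> tsum f = s.
Proof.
  intros H. unfold tsum. apply (has_sum_unique f); auto.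
  apply epsilon_spec. exists s; auto.
Qed.

Lemma tsum_spec {T} (f:T->R) : summable f -> has_sum f (tsum f).
Proof. intros [s H]. rewrite (tsum_eq f s H); auto. Qed.

Lemma has_sum_plus {T} (f g:T->R) s t : has_sum f s -> has_sum g t -> has_sum (fun x => f x + g x) (s + t).
Proof.
  intros H H' eps He. destruct (H (eps/2)) as [l0 Hl0]; [lra|].
  destruct (H' (eps/2)) as [l0' Hl0']; [lra|].
  exists (l0 ++ l0'). intros l Hn Hi. rewrite sum_list_plus.
  assert (A1 := Hl0 l Hn (fun x h => Hi x (in_or_app _ _ _ (or_introl h)))).
  assert (A2 := Hl0' l Hn (fun x h => Hi x (in_or_app _ _ _ (or_intror h)))).
  replace (sum_list f l + sum_list g l - (s + t)) with ((sum_list f l - s) + (sum_list g l - t)) by ring.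
  eapply Rle_lt_trans; [apply Rabs_triang|lra].
Qed.

Lemma has_sum_scal {T} (f:T->R) k s : has_sum f s -> has_sum (fun x => k * f x) (k * s).
Proof.
  intros H eps He. destruct (H (eps / (Rabs k + 1))) as [l0 Hl0].
  { apply Rdiv_lt_0_compat; auto. pose proof (Rabs_pos k); lra. }
  exists l0. intros l Hn Hi. rewrite sum_list_scal.
  replace (k * sum_list f l - k * s) with (k * (sum_list f l - s)) by ring.
  rewrite Rabs_mult. specialize (Hl0 l Hn Hi).
  assert (Hk : 0 <= Rabs k) by apply Rabs_pos.
  assert (Rabs k * Rabs (sum_list f l - s) <= Rabs k * (eps / (Rabs k + 1))).
  { apply Rmult_le_compat_l; lra. }
  assert (Rabs k * (eps / (Rabs k + 1)) < eps).
  { unfold Rdiv. rewrite <- Rmult_assoc. apply (Rmult_lt_reg_r (Rabs k + 1)); [lra|].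
    rewrite Rmult_assoc, Rinv_l; lra. }
  lra.
Qed.

Lemma has_sum_ext {T} (f g:T->R) s : (forall x, f x = g x) -> has_sum f s -> has_sum g s.
Proof. intros H. replace g with f; auto. apply functional_extensionality; auto. Qed.

Lemma tsum_ext {T} (f g:T->R) : (forall x, f x = g x) -> tsum f = tsum g.
Proof. intros H. replace g with f; auto. apply functional_extensionality; auto. Qed.

Lemma summable_plus {T} (f g:T->R) : summable f -> summable g -> summable (fun x => f x + g x).
Proof. intros [s H] [t H']. exists (s+t); apply has_sum_plus; auto. Qed.

Lemma summable_scal {T} (f:T->R) k : summable f -> summable (fun x => k * f x).
Proof. intros [s H]. exists (k*s); apply has_sum_scal; auto. Qed.

Lemma tsum_plus {T} (f g:T->R) : summable f -> summable g -> tsum (fun x => f x + g x) = tsum f + tsum g.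
Proof. intros Hf Hg. apply tsum_eq, has_sum_plus; apply tsum_spec; auto. Qed.

Lemma tsum_scal {T} (f:T->R) k : summable f -> tsum (fun x => k * f x) = k * tsum f.
Proof. intros Hf. apply tsum_eq, has_sum_scal; apply tsum_spec; auto. Qed.

Lemma summable_minus {T} (f g:T->R) : summable f -> summable g -> summable (fun x => f x - g x).
Proof. intros Hf Hg. apply (summable_plus f (fun x => -1 * g x)) in Hf; [|apply summable_scal; auto].
  destruct Hf as [s H]; exists s; eapply has_sum_ext; [|apply H]. intros; simpl; ring. Qed.

Lemma tsum_minus {T} (f g:T->R) : summable f -> summable g -> tsum (fun x => f x - g x) = tsum f - tsum g.
Proof. intros Hf Hg. rewrite (tsum_ext _ (fun x => f x + (-1) * g x)) by (intros; ring).
  rewrite tsum_plus, tsum_scal; auto; [ring|apply summable_scal; auto]. Qed.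

Lemma sum_list_le_has_sum {T} (f:T->R) s : (forall x, 0 <= f x) -> has_sum f s ->
  forall l, NoDup l -> sum_list f l <= s.
Proof.
  intros Hf H l Hl. destruct (Rle_lt_dec (sum_list f l) s) as [|Hlt]; auto. exfalso.
  destruct (H (sum_list f l - s)) as [l0 Hl0]; [lra|].
  destruct (exists_NoDup_equiv (l0 ++ l)) as [l' [Hn Hi]].
  assert (A1 := Hl0 l' Hn (fun x h => proj1 (Hi x) (in_or_app _ _ _ (or_introl h)))).
  assert (sum_list f l <= sum_list f l').
  { apply sum_list_incl_le; auto. intros x h; apply Hi, in_or_app; auto. }
  apply Rabs_def2 in A1. lra.
Qed.

Lemma sum_list_le_tsum {T} (f:T->R) l : (forall x, 0 <= f x) -> summable f -> NoDup l -> sum_list f l <= tsum f.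
Proof. intros Hf Hs Hl. apply sum_list_le_has_sum; auto. apply tsum_spec; auto. Qed.

Lemma tsum_nonneg {T} (f:T->R) : (forall x, 0 <= f x) -> summable f -> 0 <= tsum f.
Proof. intros. apply (sum_list_le_tsum f []); auto. constructor. Qed.

Lemma tsum_ge_term {T} (f:T->R) x : (forall x, 0 <= f x) -> summable f -> f x <= tsum f.
Proof. intros. pose proof (sum_list_le_tsum f [x]); simpl in *. apply Rle_trans with (f x + 0); [lra|].
  apply H1; auto. constructor; [intro h; inversion h|constructor]. Qed.

Lemma summable_bounded {T} (f:T->R) K : (forall x, 0 <= f x) ->
  (forall l, NoDup l -> sum_list f l <= K) -> summable f /\ tsum f <= K.
Proof.
  intros Hf HK.
  set (E := fun r => exists l, NoDup l /\ r = sum_list f l).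
  assert (HB : bound E). { exists K; intros r [l [Hl ->]]; auto. }
  assert (HE : exists r, E r). { exists 0, []; split; [constructor| reflexivity]. }
  destruct (completeness E HB HE) as [s [Hub Hlub]].
  assert (Hs : has_sum f s).
  { intros eps He.
    destruct (classic (exists l, NoDup l /\ s - eps < sum_list f l)) as [[l0 [Hn0 Hl0]]|Hno].
    - exists l0. intros l Hn Hi.
      assert (sum_list f l0 <= sum_list f l) by (apply sum_list_incl_le; auto).
      assert (sum_list f l <= s) by (apply Hub; exists l; auto).
      apply Rabs_def1; lra.
    - exfalso. assert (s <= s - eps); [|lra]. apply Hlub. intros r [l [Hl ->]].
      destruct (Rle_lt_dec (sum_list f l) (s - eps)); auto. exfalso; apply Hno; exists l; auto. }
  split; [exists s; auto|]. rewrite (tsum_eq f s Hs). apply Hlub. intros r [l [Hl ->]]. auto.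
Qed.

Lemma summable_compare {T} (f g:T->R) : (forall x, 0 <= f x <= g x) -> summable g ->
  summable f /\ tsum f <= tsum g.
Proof.
  intros H Hg. apply summable_bounded; [intros x; apply H|].
  intros l Hl. apply Rle_trans with (sum_list g l); [apply sum_list_le; intros; apply H|].
  apply sum_list_le_tsum; auto. intros x; specialize (H x); lra.
Qed.

Lemma summable_abs_compare {T} (f g:T->R) : (forall x, Rabs (f x) <= g x) -> summable g ->
  summable f /\ Rabs (tsum f) <= tsum g.
Proof.
  intros H Hg.
  assert (Hp : summable (fun x => Rmax (f x) 0) /\ tsum (fun x => Rmax (f x) 0) <= tsum g).
  { apply summable_compare; auto. intros x; specialize (H x); split; [apply Rmax_r|].
    apply Rmax_lub; [eapply Rle_trans; [apply Rle_abs|auto]| pose proof (Rabs_pos (f x)); lra]. }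
  assert (Hn : summable (fun x => Rmax (- f x) 0) /\ tsum (fun x => Rmax (- f x) 0) <= tsum g).
  { apply summable_compare; auto. intros x; specialize (H x); split; [apply Rmax_r|].
    apply Rmax_lub; [eapply Rle_trans; [apply Rle_abs|rewrite Rabs_Ropp; auto]| pose proof (Rabs_pos (f x)); lra]. }
  destruct Hp as [Hp1 Hp2], Hn as [Hn1 Hn2].
  assert (Heq : forall x, f x = Rmax (f x) 0 - Rmax (- f x) 0).
  { intros x. unfold Rmax. repeat destruct Rle_dec; lra. }
  assert (Hs : summable f).
  { destruct (summable_minus _ _ Hp1 Hn1) as [s Hs]; exists s; eapply has_sum_ext; [|apply Hs]; intros; simpl; rewrite <- Heq; auto. }
  split; auto.
  assert (Ht : tsum f = tsum (fun x => Rmax (f x) 0) - tsum (fun x => Rmax (- f x) 0)).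
  { rewrite <- tsum_minus; auto. apply tsum_ext; auto. }
  assert (tsum (fun x => Rmax (f x) 0) + tsum (fun x => Rmax (- f x) 0) <= tsum g).
  { rewrite <- tsum_plus; auto. apply summable_compare; auto.
    intros x; specialize (H x); split; [pose proof (Rmax_r (f x) 0); pose proof (Rmax_r (-f x) 0); lra|].
    eapply Rle_trans; [|apply H]. unfold Rmax; repeat destruct Rle_dec; unfold Rabs; destruct Rcase_abs; lra. }
  pose proof (tsum_nonneg (fun x => Rmax (f x) 0) (fun x => Rmax_r _ _) Hp1).
  pose proof (tsum_nonneg (fun x => Rmax (- f x) 0) (fun x => Rmax_r _ _) Hn1).
  rewrite Ht. apply Rabs_le. lra.
Qed.

Lemma tsum_le {T} (f g:T->R) : (forall x, f x <= g x) -> summable f -> summable g -> tsum f <= tsum g.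
Proof. intros H Hf Hg. assert (0 <= tsum (fun x => g x - f x)).
  { apply tsum_nonneg; [intros x; specialize (H x); lra| apply summable_minus; auto]. }
  rewrite tsum_minus in H0; auto; lra. Qed.

Definition preimg {A B} (e : A -> B) (y : B) : list A :=
  match excluded_middle_informative (exists a, e a = y) with
  | left H => [proj1_sig (constructive_indefinite_description _ H)]
  | right _ => []
  end.

Lemma has_sum_embed {A B} (e : A -> B) (g : B -> R) s :
  (forall a a', e a = e a' -> a = a') -> (forall y, (forall a, e a <> y) -> g y = 0) ->
  has_sum (fun a => g (e a)) s -> has_sum g s.
Proof.
  intros Hinj Hz H eps He. destruct (H eps He) as [l0 Hl0].
  exists (map e l0). intros l Hn Hi.
  set (lA := flat_map (preimg e) l).
  assert (Hsum : sum_list g l = sum_list (fun a => g (e a)) lA).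
  { unfold lA; clear Hn Hi. induction l as [|y l IH]; simpl; auto.
    rewrite sum_list_app, IH. f_equal. unfold preimg.
    destruct excluded_middle_informative as [Hy|Hy].
    - destruct constructive_indefinite_description as [a0 Ha0]; simpl. rewrite Ha0; ring.
    - simpl. rewrite Hz; [ring|]. intros a h; apply Hy; eauto. }
  assert (HinA : forall a, In a lA <-> In (e a) l).
  { intros a. unfold lA. rewrite in_flat_map. split.
    - intros [y [Hy Ha]]. unfold preimg in Ha. destruct excluded_middle_informative as [Hy'|Hy'].
      + destruct constructive_indefinite_description as [a0 Ha0]; simpl in Ha. destruct Ha as [<-|[]]. rewrite Ha0; auto.
      + destruct Ha.
    - intros h. exists (e a); split; auto. unfold preimg. destruct excluded_middle_informative as [Hy'|Hy'].
      + destruct constructive_indefinite_description as [a0 Ha0]; simpl. left; auto.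
      + exfalso; apply Hy'; eauto. }
  assert (HnA : NoDup lA).
  { unfold lA. clear Hi Hsum HinA. induction Hn as [|y l Hy Hn IH]; simpl; [constructor|].
    unfold preimg at 1. destruct excluded_middle_informative as [Hy'|Hy'].
    - destruct constructive_indefinite_description as [a0 Ha0]; simpl. constructor; auto.
      intro h. apply in_flat_map in h. destruct h as [y' [Hy'' Ha]]. unfold preimg in Ha.
      destruct excluded_middle_informative as [H3|H3]; [|destruct Ha].
      destruct constructive_indefinite_description as [a1 Ha1]; simpl in Ha. destruct Ha as [->|[]].
      apply Hy. rewrite <- Ha0, Ha1; auto.
    - simpl; auto. }
  rewrite Hsum. apply Hl0; auto. intros a h. apply HinA. apply Hi. apply in_map; auto.
Qed.

Lemma has_sum_single {T} (g : T -> R) x0 : (forall y, y <> x0 -> g y = 0) -> has_sum g (g x0).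
Proof.
  intros H. apply (has_sum_embed (fun _ : unit => x0) g).
  - intros [] []; auto.
  - intros y Hy. apply H. intro h; apply (Hy tt); auto.
  - intros eps He. exists [tt]. intros l Hn Hi. destruct l as [|[] [|[] l]].
    + exfalso; apply (Hi tt); simpl; auto.
    + simpl. replace (g x0 + 0 - g x0) with 0 by ring. rewrite Rabs_R0; auto.
    + inversion Hn; subst. exfalso; apply H2; simpl; auto.
Qed.

Lemma has_sum_sum {A B} (g : A + B -> R) s t :
  has_sum (fun a => g (inl a)) s -> has_sum (fun b => g (inr b)) t -> has_sum g (s + t).
Proof.
  intros H1 H2.
  assert (E1 : has_sum (fun i : A + B => match i with inl a => g (inl a) | inr _ => 0 end) s).
  { apply (has_sum_embed (@inl A B)); auto. intros a a' h; inversion h; auto.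
    intros [a|b] h; auto. exfalso; apply (h a); auto. }
  assert (E2 : has_sum (fun i : A + B => match i with inr b => g (inr b) | inl _ => 0 end) t).
  { apply (has_sum_embed (@inr A B)); auto. intros a a' h; inversion h; auto.
    intros [a|b] h; auto. exfalso; apply (h b); auto. }
  eapply has_sum_ext; [|apply (has_sum_plus _ _ _ _ E1 E2)]. intros [a|b]; simpl; ring.
Qed.

Lemma NoDup_map_inj {A B} (e : A -> B) l : (forall a a', e a = e a' -> a = a') -> NoDup l -> NoDup (map e l).
Proof. intros Hi Hn; induction Hn; simpl; constructor; auto. intro h; apply in_map_iff in h.
  destruct h as [y [h1 h2]]. apply Hi in h1; subst; auto. Qed.

Lemma sum_list_map {A B} (g : B -> R) (e : A -> B) l : sum_list g (map e l) = sum_list (fun a => g (e a)) l.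
Proof. induction l; simpl; auto; rewrite IHl; auto. Qed.

Lemma summable_restrict {A B} (e : A -> B) (g : B -> R) :
  (forall a a', e a = e a' -> a = a') -> (forall y, 0 <= g y) -> summable g ->
  summable (fun a => g (e a)) /\ tsum (fun a => g (e a)) <= tsum g.
Proof.
  intros Hi Hp Hs. apply summable_bounded; auto. intros l Hl.
  rewrite <- sum_list_map. apply sum_list_le_tsum; auto. apply NoDup_map_inj; auto.
Qed.

Lemma summable_sum_iff {A B} (g : A + B -> R) : (forall y, 0 <= g y) ->
  (summable g <-> summable (fun a => g (inl a)) /\ summable (fun b => g (inr b))).
Proof.
  intros Hp; split.
  - intros Hs; split; apply summable_restrict; auto; intros a a' h; inversion h; auto.
  - intros [[s H1] [t H2]]. exists (s+t). apply has_sum_sum; auto.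
Qed.

Lemma tsum_sum {A B} (g : A + B -> R) :
  summable (fun a => g (inl a)) -> summable (fun b => g (inr b)) ->
  tsum g = tsum (fun a => g (inl a)) + tsum (fun b => g (inr b)).
Proof. intros H1 H2. apply tsum_eq, has_sum_sum; apply tsum_spec; auto. Qed.

Lemma Un_cv_const (r : R) : Un_cv (fun _ : nat => r) r.
Proof. intros e He; exists 0%nat; intros; unfold R_dist; rewrite Rminus_diag, Rabs_R0; auto. Qed.

Lemma Un_cv_0_squeeze (u v : nat -> R) : (forall n, 0 <= u n <= v n) -> Un_cv v 0 -> Un_cv u 0.
Proof. intros H Hv e He. destruct (Hv e He) as [N HN]; exists N; intros n Hn; specialize (HN n Hn); specialize (H n).
  unfold R_dist in *. rewrite Rminus_0_r in *. rewrite Rabs_right in * by lra. lra. Qed.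

Lemma Un_cv_sum_list {T} (F : nat -> T -> R) (G : T -> R) l :
  (forall i, Un_cv (fun n => F n i) (G i)) -> Un_cv (fun n => sum_list (F n) l) (sum_list G l).
Proof.
  intros H. induction l as [|a l IH]; simpl.
  - apply Un_cv_const.
  - apply CV_plus; auto.
Qed.

Lemma Un_cv_le_eventually {u : nat -> R} L K N : Un_cv u L -> (forall n, (n >= N)%nat -> u n <= K) -> L <= K.
Proof.
  intros H HK. destruct (Rle_lt_dec L K) as [|Hl]; auto. exfalso.
  destruct (H (L - K)) as [N' HN']; [lra|]. specialize (HN' (max N N') ltac:(lia)).
  specialize (HK (max N N') ltac:(lia)). unfold R_dist in HN'. apply Rabs_def2 in HN'. lra.
Qed.

Lemma summable_tail_small {T} (f : T -> R) : (forall x, 0 <= f x) -> summable f ->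
  forall eps, eps > 0 -> exists l0, NoDup l0 /\
   forall l, NoDup l -> (forall x, In x l -> ~ In x l0) -> sum_list f l < eps.
Proof.
  intros Hp [s Hs] eps He. destruct (Hs (eps/2)) as [l0' Hl0]; [lra|].
  destruct (exists_NoDup_equiv l0') as [l0 [Hn Hi]]. exists l0; split; auto.
  intros l Hl Hd.
  assert (Hn2 : NoDup (l0 ++ l)). { apply NoDup_app; auto. intros a h1 h2; apply (Hd a); auto. }
  assert (A1 := Hl0 (l0 ++ l) Hn2 (fun x h => in_or_app _ _ _ (or_introl (proj1 (Hi x) h)))).
  assert (A2 := Hl0 l0 Hn (fun x h => proj1 (Hi x) h)).
  rewrite sum_list_app in A1. apply Rabs_def2 in A1. apply Rabs_def2 in A2. lra.
Qed.

Lemma summable_ext {T} (f g:T->R) : (forall x, f x = g x) -> summable f -> summable g.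
Proof. intros H. replace g with f; auto. apply functional_extensionality; auto. Qed.

Lemma Rabs_le_inv (x a : R) : Rabs x <= a -> -a <= x <= a.
Proof. unfold Rabs; destruct Rcase_abs; lra. Qed.

(** * Square-summable families *)

Definition sq_summable {I} (g:I->R) := summable (fun i => g i * g i).
Definition sqnorm {I} (g:I->R) := tsum (fun i => g i * g i).
Definition inner {I} (g h:I->R) := tsum (fun i => g i * h i).

Lemma sq_summable_ext {I} (g h : I -> R) : (forall i, g i = h i) -> sq_summable g -> sq_summable h.
Proof. intros H. replace h with g; auto. apply functional_extensionality; auto. Qed.
Lemma sqnorm_ext {I} (g h : I -> R) : (forall i, g i = h i) -> sqnorm g = sqnorm h.
Proof. intros H. replace h with g; auto. apply functional_extensionality; auto. Qed.

Lemma sq_abs (a : R) : a * a = Rabs a * Rabs a.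
Proof. rewrite <- Rabs_mult. rewrite Rabs_right; nra. Qed.

Lemma sq_abs_le (a b : R) : Rabs a <= Rabs b -> a * a <= b * b.
Proof. intros H. rewrite (sq_abs a), (sq_abs b). pose proof (Rabs_pos a). nra. Qed.

Lemma Rabs_mult_le_avg (a b t : R) : t > 0 -> Rabs (a * b) <= (t * (a*a) + (b*b) / t) / 2.
Proof.
  intros Ht. rewrite Rabs_mult.
  assert (2 * t * (Rabs a * Rabs b) <= t * t * (a * a) + b * b).
  { rewrite (sq_abs a), (sq_abs b).
    pose proof (Rle_0_sqr (t * Rabs a - Rabs b)); unfold Rsqr in *. nra. }
  apply (Rmult_le_reg_l (2 * t)); [lra|].
  replace (2 * t * ((t * (a * a) + b * b / t) / 2)) with (t * t * (a*a) + b*b) by (field; lra). lra.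
Qed.

Lemma sq_summable_prod {I} (g h : I -> R) : sq_summable g -> sq_summable h -> summable (fun i => g i * h i).
Proof.
  intros Hg Hh. apply (summable_abs_compare _ (fun i => (1 * (g i * g i) + (h i * h i) / 1) / 2)).
  - intros; apply Rabs_mult_le_avg; lra.
  - apply (summable_ext (fun i => /2 * (g i * g i + h i * h i))); [intros; field|].
    apply summable_scal, summable_plus; auto.
Qed.

Lemma sq_summable_plus {I} (g h : I -> R) : sq_summable g -> sq_summable h -> sq_summable (fun i => g i + h i).
Proof.
  intros Hg Hh. apply (summable_compare _ (fun i => 2 * (g i * g i + h i * h i))).
  - intros i; pose proof (Rle_0_sqr (g i - h i)); pose proof (Rle_0_sqr (g i + h i)); unfold Rsqr in *; split; nra.
  - apply summable_scal, summable_plus; auto.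
Qed.

Lemma sq_summable_scal {I} (g : I -> R) k : sq_summable g -> sq_summable (fun i => k * g i).
Proof. intros Hg. apply (summable_ext (fun i => (k*k) * (g i * g i))); [intros; ring|].
  apply summable_scal; auto. Qed.

Lemma sq_summable_minus {I} (g h : I -> R) : sq_summable g -> sq_summable h -> sq_summable (fun i => g i - h i).
Proof. intros Hg Hh. apply (summable_ext (fun i => (g i + (-1) * h i) * (g i + (-1) * h i))); [intros; ring|].
  apply (sq_summable_plus g (fun i => -1 * h i)); auto. apply sq_summable_scal; auto. Qed.

Lemma sqnorm_nonneg {I} (g : I -> R) : sq_summable g -> 0 <= sqnorm g.
Proof. intros; apply tsum_nonneg; auto. intros; nra. Qed.

Lemma sqnorm_plus {I} (g h : I -> R) : sq_summable g -> sq_summable h ->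
  sqnorm (fun i => g i + h i) = sqnorm g + 2 * inner g h + sqnorm h.
Proof.
  intros Hg Hh. unfold sqnorm, inner.
  rewrite (tsum_ext _ (fun i => (g i * g i + 2 * (g i * h i)) + h i * h i)) by (intros; ring).
  rewrite tsum_plus, tsum_plus, tsum_scal; auto; try apply summable_scal; try apply summable_plus;
    try apply summable_scal; try apply sq_summable_prod; auto.
Qed.

Lemma sqnorm_minus {I} (g h : I -> R) : sq_summable g -> sq_summable h ->
  sqnorm (fun i => g i - h i) = sqnorm g - 2 * inner g h + sqnorm h.
Proof.
  intros Hg Hh. unfold sqnorm, inner.
  rewrite (tsum_ext _ (fun i => (g i * g i + (-2) * (g i * h i)) + h i * h i)) by (intros; ring).
  rewrite tsum_plus, tsum_plus, tsum_scal; auto; try apply summable_scal; try apply summable_plus;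
    try apply summable_scal; try apply sq_summable_prod; auto. ring.
Qed.

Lemma sqnorm_scal {I} (g : I -> R) k : sq_summable g -> sqnorm (fun i => k * g i) = k * k * sqnorm g.
Proof. intros Hg. unfold sqnorm. rewrite (tsum_ext _ (fun i => (k*k) * (g i * g i))) by (intros; ring).
  apply tsum_scal; auto. Qed.

Lemma inner_bound {I} (g h : I -> R) t : t > 0 -> sq_summable g -> sq_summable h -> Rabs (inner g h) <= (t * sqnorm g + sqnorm h / t) / 2.
Proof.
  intros Ht Hg Hh. unfold inner, sqnorm.
  replace ((t * tsum (fun i => g i * g i) + tsum (fun i => h i * h i) / t) / 2)
    with (tsum (fun i => (t * (g i * g i) + (h i * h i) / t) / 2)).
  - apply summable_abs_compare; [intros; apply Rabs_mult_le_avg; auto|].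
    apply (summable_ext (fun i => /2 * (t * (g i * g i) + /t * (h i * h i)))); [intros; field; lra|].
    apply summable_scal, summable_plus; apply summable_scal; auto.
  - rewrite (tsum_ext _ (fun i => /2 * (t * (g i * g i) + /t * (h i * h i)))) by (intros; field; lra).
    rewrite tsum_scal, tsum_plus, !tsum_scal; auto; try (apply summable_plus); try apply summable_scal; auto.
    field; lra.
Qed.

Lemma sqnorm_compare {I} (g h : I -> R) : (forall i, Rabs (g i) <= Rabs (h i)) -> sq_summable h -> sq_summable g /\ sqnorm g <= sqnorm h.
Proof. intros H Hh. apply summable_compare; auto. intros i; split; [nra|apply sq_abs_le; auto]. Qed.

Lemma sqnorm_plus_le {I} (g h : I -> R) : sq_summable g -> sq_summable h -> sqnorm (fun i => g i + h i) <= 2 * sqnorm g + 2 * sqnorm h.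
Proof.
  intros Hg Hh. unfold sqnorm. rewrite <- !tsum_scal by auto. rewrite <- tsum_plus by (apply summable_scal; auto).
  apply tsum_le; [intros i; pose proof (Rle_0_sqr (g i - h i)); unfold Rsqr in *; nra| apply sq_summable_plus; auto| apply summable_plus; apply summable_scal; auto].
Qed.

Lemma sqnorm_fatou {I} (G : nat -> I -> R) (g : I -> R) N K :
  (forall i, Un_cv (fun n => G n i) (g i)) -> (forall n, (n >= N)%nat -> sq_summable (G n) /\ sqnorm (G n) <= K) ->
  sq_summable g /\ sqnorm g <= K.
Proof.
  intros Hc HK. apply summable_bounded; [intros; nra|]. intros l Hl.
  apply (Un_cv_le_eventually (u := fun n => sum_list (fun i => G n i * G n i) l) _ K N).
  - apply (Un_cv_sum_list (fun n i => G n i * G n i)). intros i; apply CV_mult; auto.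
  - intros n Hn. destruct (HK n Hn) as [H1 H2]. eapply Rle_trans; [|apply H2].
    apply sum_list_le_tsum; auto. intros; nra.
Qed.

Lemma sqnorm_dominated_cv0 {I} (G : nat -> I -> R) (h : I -> R) :
  (forall n i, Rabs (G n i) <= Rabs (h i)) -> sq_summable h -> (forall i, Un_cv (fun n => G n i) 0) ->
  Un_cv (fun n => sqnorm (G n)) 0.
Proof.
  intros Hd Hh Hc eps He.
  destruct (summable_tail_small (fun i => h i * h i) ltac:(intros; nra) Hh (eps/4)) as [l0 [Hn0 Ht]]; [lra|].
  assert (Hcv := Un_cv_sum_list (fun n i => G n i * G n i) (fun _ => 0) l0
    (fun i => ltac:(replace 0 with (0*0) by ring; apply CV_mult; auto))).
  destruct (Hcv (eps/4)) as [N HN]; [lra|]. exists N. intros n Hn.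
  specialize (HN n Hn). unfold R_dist in *.
  assert (Hz : sum_list (fun _ : I => 0) l0 = 0) by (clear; induction l0; simpl; auto; rewrite IHl0; ring).
  rewrite Hz, Rminus_0_r in HN. apply Rabs_def2 in HN.
  destruct (summable_bounded (fun i => G n i * G n i) (eps/2)) as [_ Hb].
  - intros; nra.
  - intros l Hl. rewrite (sum_list_filter _ (inb l0) l).
    assert (sum_list (fun i => G n i * G n i) (filter (inb l0) l) <= sum_list (fun i => G n i * G n i) l0).
    { apply sum_list_incl_le; auto; [intros; nra| apply NoDup_filter; auto|].
      intros x hx. apply filter_In in hx. apply inb_spec; tauto. }
    assert (sum_list (fun i => G n i * G n i) (filter (fun x => negb (inb l0 x)) l) <=
            sum_list (fun i => h i * h i) (filter (fun x => negb (inb l0 x)) l)).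
    { apply sum_list_le. intros; apply sq_abs_le; auto. }
    assert (sum_list (fun i => h i * h i) (filter (fun x => negb (inb l0 x)) l) < eps/4).
    { apply Ht; [apply NoDup_filter; auto|]. intros x hx h0. apply filter_In in hx.
      destruct hx as [_ hx]. apply (proj2 (inb_spec l0 x)) in h0. rewrite h0 in hx; discriminate. }
    lra.
  - rewrite Rminus_0_r. rewrite Rabs_right; [unfold sqnorm; lra|].
    apply Rle_ge. apply sqnorm_nonneg. apply (sqnorm_compare _ h); auto.
Qed.

Lemma sqnorm_cv {I} (G : nat -> I -> R) (g : I -> R) :
  sq_summable g -> (forall n, sq_summable (G n)) -> Un_cv (fun n => sqnorm (fun i => G n i - g i)) 0 ->
  Un_cv (fun n => sqnorm (G n)) (sqnorm g).
Proof.
  intros Hg HG Hc eps He.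
  pose proof (sqnorm_nonneg g Hg) as Hg0.
  set (t := eps / (3 * (sqnorm g + 1))).
  assert (Ht : t > 0) by (unfold t; apply Rdiv_lt_0_compat; lra).
  destruct (Hc (Rmin (eps/3) (t * eps / 3))) as [N HN].
  { apply Rmin_pos; [lra|]. apply Rdiv_lt_0_compat; [nra|lra]. }
  exists N. intros n Hn. specialize (HN n Hn). unfold R_dist in *. rewrite Rminus_0_r in HN.
  set (d := fun i => G n i - g i).
  assert (Hd : sq_summable d) by (apply sq_summable_minus; auto).
  assert (HGn : sqnorm (G n) = sqnorm g + 2 * inner g d + sqnorm d).
  { rewrite <- sqnorm_plus; auto. unfold sqnorm; apply tsum_ext; intros; unfold d; ring_simplify; auto. }
  pose proof (sqnorm_nonneg d Hd). change (sqnorm (fun i : I => G n i - g i)) with (sqnorm d) in HN. rewrite Rabs_right in HN by lra.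
  assert (HB := inner_bound g d t Ht Hg Hd).
  assert (Hm1 : sqnorm d < eps/3) by (eapply Rlt_le_trans; [apply HN| apply Rmin_l]).
  assert (Hm2 : sqnorm d < t * eps / 3) by (eapply Rlt_le_trans; [apply HN| apply Rmin_r]).
  assert (Hq : sqnorm d / t < eps / 3).
  { apply (Rmult_lt_reg_r t); auto. unfold Rdiv. rewrite Rmult_assoc, Rinv_l by lra. nra. }
  assert (Htg : t * sqnorm g < eps / 3).
  { unfold t. unfold Rdiv. rewrite Rinv_mult. 
    apply Rle_lt_trans with (eps * / 3 * (sqnorm g * / (sqnorm g + 1))); [right; ring|].
    assert (sqnorm g * / (sqnorm g + 1) < 1). { apply (Rmult_lt_reg_r (sqnorm g + 1)); [lra|]. rewrite Rmult_assoc, Rinv_l; lra. }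
    nra. }
  rewrite HGn. apply Rabs_le_inv in HB. apply Rabs_def1; lra.
Qed.

Lemma inner_polar {I} (g h : I -> R) : sq_summable g -> sq_summable h ->
  inner g h = (sqnorm (fun i => g i + h i) - sqnorm (fun i => g i - h i)) / 4.
Proof. intros; rewrite sqnorm_plus, sqnorm_minus; auto; field. Qed.

Lemma sqnorm_combination_cv {I} (G H : nat -> I -> R) (g h : I -> R) k :
  sq_summable g -> sq_summable h -> (forall n, sq_summable (G n)) -> (forall n, sq_summable (H n)) ->
  Un_cv (fun n => sqnorm (fun i => G n i - g i)) 0 -> Un_cv (fun n => sqnorm (fun i => H n i - h i)) 0 ->
  Un_cv (fun n => sqnorm (fun i => G n i + k * H n i)) (sqnorm (fun i => g i + k * h i)).
Proof.
  intros Hg Hh HG HH C1 C2.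
  apply sqnorm_cv; [apply sq_summable_plus, sq_summable_scal; auto| intros; apply sq_summable_plus, sq_summable_scal; auto|].
  assert (Ha : forall n, sq_summable (fun i => G n i - g i)) by (intros; apply sq_summable_minus; auto).
  assert (Hb : forall n, sq_summable (fun i => k * (H n i - h i))) by (intros; apply sq_summable_scal, sq_summable_minus; auto).
  apply (Un_cv_0_squeeze _ (fun n => 2 * sqnorm (fun i => G n i - g i) + 2 * (k * k * sqnorm (fun i => H n i - h i)))).
  - intros n. rewrite (sqnorm_ext _ (fun i => (G n i - g i) + k * (H n i - h i))) by (intros; ring).
    split; [apply sqnorm_nonneg, sq_summable_plus; auto|].
    rewrite <- (sqnorm_scal (fun i => H n i - h i)) by (apply sq_summable_minus; auto).
    apply sqnorm_plus_le; auto.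
  - replace 0 with (2 * 0 + 2 * (k * k * 0)) by ring.
    apply CV_plus; apply CV_mult; auto using Un_cv_const. apply CV_mult; auto using Un_cv_const.
Qed.

Lemma inner_cv {I} (G H : nat -> I -> R) (g h : I -> R) :
  sq_summable g -> sq_summable h -> (forall n, sq_summable (G n)) -> (forall n, sq_summable (H n)) ->
  Un_cv (fun n => sqnorm (fun i => G n i - g i)) 0 -> Un_cv (fun n => sqnorm (fun i => H n i - h i)) 0 ->
  Un_cv (fun n => inner (G n) (H n)) (inner g h).
Proof.
  intros Hg Hh HG HH C1 C2.
  assert (E : forall (G' H' : I -> R), sq_summable G' -> sq_summable H' ->
      inner G' H' = (sqnorm (fun i => G' i + 1 * H' i) - sqnorm (fun i => G' i + -1 * H' i)) / 4).
  { intros G' H' h1 h2. rewrite inner_polar by auto.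
    rewrite (sqnorm_ext (fun i => G' i + 1 * H' i) (fun i => G' i + H' i)) by (intros; ring).
    rewrite (sqnorm_ext (fun i => G' i + -1 * H' i) (fun i => G' i - H' i)) by (intros; ring). reflexivity. }
  rewrite E by auto. apply (Un_cv_ext (fun n => (sqnorm (fun i => G n i + 1 * H n i) - sqnorm (fun i => G n i + -1 * H n i)) / 4)).
  { intros n; rewrite E; auto. }
  unfold Rdiv. apply CV_mult; [|apply Un_cv_const].
  apply CV_minus; apply sqnorm_combination_cv; auto.
Qed.

Lemma sq_summable_sum_iff {A B} (g : A + B -> R) :
  sq_summable g <-> sq_summable (fun a => g (inl a)) /\ sq_summable (fun b => g (inr b)).
Proof. unfold sq_summable. apply (summable_sum_iff (fun i => g i * g i)). intros; nra. Qed.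

Lemma sqnorm_sum {A B} (g : A + B -> R) : sq_summable g -> sqnorm g = sqnorm (fun a => g (inl a)) + sqnorm (fun b => g (inr b)).
Proof. intros H. apply sq_summable_sum_iff in H. destruct H. unfold sqnorm. apply (tsum_sum (fun i => g i * g i)); auto. Qed.

Lemma inner_sum {A B} (g h : A + B -> R) : sq_summable g -> sq_summable h ->
  inner g h = inner (fun a => g (inl a)) (fun a => h (inl a)) + inner (fun b => g (inr b)) (fun b => h (inr b)).
Proof. intros H1 H2. apply sq_summable_sum_iff in H1. apply sq_summable_sum_iff in H2. destruct H1, H2. unfold inner.
  apply (tsum_sum (fun i => g i * h i)); apply sq_summable_prod; auto. Qed.

Lemma sqnorm_ge_term {I} (g : I -> R) i : sq_summable g -> g i * g i <= sqnorm g.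
Proof. intros H. apply (tsum_ge_term (fun i => g i * g i)); auto. intros; nra. Qed.

Lemma sqnorm_ext_sq {I} (g h : I -> R) : (forall i, g i * g i = h i * h i) -> sqnorm g = sqnorm h.
Proof. intros H; unfold sqnorm; apply tsum_ext; auto. Qed.

Lemma sqnorm_minus_sym {I} (g h : I -> R) : sqnorm (fun i => g i - h i) = sqnorm (fun i => h i - g i).
Proof. unfold sqnorm; apply tsum_ext; intros; ring. Qed.

(** * The energy vector of a real function *)

(* [sqnorm (evec m b c f)] is ||f||^2 + Q(f): the three blocks carry the mass, the killing
   term and the edges (the edge block runs over ordered pairs, hence [b / 2]). *)
Definition wscale {V} (w : V -> R) (f : V -> R) : V -> R := fun x => sqrt (w x) * f x.
Definition grad {V} (b : V -> V -> R) (f : V -> R) : V * V -> R :=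
  fun p => sqrt (b (fst p) (snd p) / 2) * (f (fst p) - f (snd p)).
Definition qvec {V} (b : V -> V -> R) (c : V -> R) (f : V -> R) : V + V * V -> R :=
  fun i => match i with inl x => wscale c f x | inr p => grad b f p end.
Definition evec {V} (m : V -> R) (b : V -> V -> R) (c : V -> R) (f : V -> R) : V + (V + V * V) -> R :=
  fun i => match i with inl x => wscale m f x | inr j => qvec b c f j end.

Definition fminus {V} (f g : V -> R) : V -> R := fun x => f x - g x.
Definition fplus {V} (f g : V -> R) : V -> R := fun x => f x + g x.
Definition fscal {V} (k : R) (f : V -> R) : V -> R := fun x => k * f x.

Lemma evec_minus {V} m b c (f g : V -> R) i : evec m b c (fminus f g) i = evec m b c f i - evec m b c g i.
Proof. destruct i as [x|[x|p]]; unfold evec, qvec, wscale, grad, fminus; simpl; ring. Qed.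
Lemma evec_plus {V} m b c (f g : V -> R) i : evec m b c (fplus f g) i = evec m b c f i + evec m b c g i.
Proof. destruct i as [x|[x|p]]; unfold evec, qvec, wscale, grad, fplus; simpl; ring. Qed.
Lemma evec_scal {V} m b c k (f : V -> R) i : evec m b c (fscal k f) i = k * evec m b c f i.
Proof. destruct i as [x|[x|p]]; unfold evec, qvec, wscale, grad, fscal; simpl; ring. Qed.
Lemma qvec_minus {V} b c (f g : V -> R) i : qvec b c (fminus f g) i = qvec b c f i - qvec b c g i.
Proof. destruct i as [x|p]; unfold qvec, wscale, grad, fminus; simpl; ring. Qed.
Lemma wscale_minus {V} w (f g : V -> R) i : wscale w (fminus f g) i = wscale w f i - wscale w g i.
Proof. unfold wscale, fminus; ring. Qed.

Lemma sq_summable_evec_iff {V} m b c (f : V -> R) : sq_summable (evec m b c f) <-> sq_summable (wscale m f) /\ sq_summable (qvec b c f).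
Proof. apply (sq_summable_sum_iff (evec m b c f)). Qed.
Lemma sqnorm_evec {V} m b c (f : V -> R) : sq_summable (evec m b c f) -> sqnorm (evec m b c f) = sqnorm (wscale m f) + sqnorm (qvec b c f).
Proof. intros H. apply (sqnorm_sum (evec m b c f)); auto. Qed.

Lemma sq_summable_evec_minus {V} m b c (f g : V -> R) : sq_summable (evec m b c f) -> sq_summable (evec m b c g) -> sq_summable (evec m b c (fminus f g)).
Proof. intros. apply (sq_summable_ext (fun i => evec m b c f i - evec m b c g i)); [intros; rewrite evec_minus; auto|]. apply sq_summable_minus; auto. Qed.
Lemma sq_summable_evec_plus {V} m b c (f g : V -> R) : sq_summable (evec m b c f) -> sq_summable (evec m b c g) -> sq_summable (evec m b c (fplus f g)).
Proof. intros. apply (sq_summable_ext (fun i => evec m b c f i + evec m b c g i)); [intros; rewrite evec_plus; auto|]. apply sq_summable_plus; auto. Qed.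
Lemma sq_summable_evec_scal {V} m b c k (f : V -> R) : sq_summable (evec m b c f) -> sq_summable (evec m b c (fscal k f)).
Proof. intros. apply (sq_summable_ext (fun i => k * evec m b c f i)); [intros; rewrite evec_scal; auto|]. apply sq_summable_scal; auto. Qed.
Lemma sq_summable_wscale_minus {V} w (f g : V -> R) : sq_summable (wscale w f) -> sq_summable (wscale w g) -> sq_summable (wscale w (fminus f g)).
Proof. intros. apply (sq_summable_ext (fun i => wscale w f i - wscale w g i)); [intros; rewrite wscale_minus; auto|]. apply sq_summable_minus; auto. Qed.

Lemma sqnorm_triangle {I} (x y z : I -> R) : sq_summable (fun i => x i - y i) -> sq_summable (fun i => y i - z i) ->
  sqnorm (fun i => x i - z i) <= 2 * sqnorm (fun i => x i - y i) + 2 * sqnorm (fun i => y i - z i).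
Proof. intros H1 H2. rewrite (sqnorm_ext _ (fun i => (x i - y i) + (y i - z i))) by (intros; ring).
  apply sqnorm_plus_le; auto. Qed.

Lemma evec_cv {V} m b c (G : nat -> V -> R) (g : V -> R) :
  (forall x, Un_cv (fun k => G k x) (g x)) -> forall i, Un_cv (fun k => evec m b c (G k) i) (evec m b c g i).
Proof.
  intros H [x|[x|p]]; unfold evec, qvec, wscale, grad; simpl; apply CV_mult; auto using Un_cv_const.
  apply CV_minus; auto.
Qed.

Lemma pointwise_cv_of_sqnorm {V} (w : V -> R) (G : nat -> V -> R) :
  (forall x, 0 < w x) -> (forall n, sq_summable (wscale w (G n))) -> Un_cv (fun n => sqnorm (wscale w (G n))) 0 ->
  forall x, Un_cv (fun n => G n x) 0.
Proof.
  intros Hw Hs Hc x.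
  assert (Hsq : 0 < sqrt (w x)) by (apply sqrt_lt_R0; auto).
  assert (H1 : Un_cv (fun n => wscale w (G n) x) 0).
  { intros e He. destruct (Hc (e*e)) as [N HN]; [nra|]. exists N; intros n Hn. specialize (HN n Hn).
    unfold R_dist in *. rewrite Rminus_0_r in *. pose proof (sqnorm_ge_term _ x (Hs n)).
    pose proof (Rle_abs (sqnorm (wscale w (G n)))). 
    assert (Rabs (wscale w (G n) x) * Rabs (wscale w (G n) x) < e * e) by (rewrite <- sq_abs; lra).
    pose proof (Rabs_pos (wscale w (G n) x)). nra. }
  apply (Un_cv_ext (fun n => / sqrt (w x) * wscale w (G n) x)).
  { intros n; unfold wscale. field. lra. }
  replace 0 with (/ sqrt (w x) * 0) by ring. apply CV_mult; auto using Un_cv_const.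
Qed.

Definition finsupp_real {V} (f : V -> R) : Prop := exists l : list V, forall x, f x <> 0 -> In x l.

(* Real counterpart of D(Q^(D)): l^2-limits of finitely supported functions that are
   Cauchy for the form. *)
Definition dirichlet {V} (m : V -> R) (b : V -> V -> R) (c : V -> R) (f : V -> R) : Prop :=
  sq_summable (wscale m f) /\ exists a : nat -> V -> R,
    (forall n, finsupp_real (a n) /\ sq_summable (evec m b c (a n))) /\
    Un_cv (fun n => sqnorm (wscale m (fminus (a n) f))) 0 /\
    (forall eps, eps > 0 -> exists N, forall n k, (n >= N)%nat -> (k >= N)%nat ->
        sqnorm (qvec b c (fminus (a n) (a k))) < eps).

Lemma evec_cauchy_of_parts {V} m b c (f : V -> R) (a : nat -> V -> R) :
  sq_summable (wscale m f) -> (forall n, sq_summable (evec m b c (a n))) ->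
  Un_cv (fun n => sqnorm (wscale m (fminus (a n) f))) 0 ->
  (forall eps, eps > 0 -> exists N, forall n k, (n >= N)%nat -> (k >= N)%nat ->
        sqnorm (qvec b c (fminus (a n) (a k))) < eps) ->
  forall eps, eps > 0 -> exists N, forall n k, (n >= N)%nat -> (k >= N)%nat ->
        sqnorm (evec m b c (fminus (a k) (a n))) < eps.
Proof.
  intros Hf Ha Hc HC eps He.
  assert (HaW : forall n, sq_summable (wscale m (a n))) by (intros n; apply (proj1 (sq_summable_evec_iff m b c (a n)) (Ha n))).
  assert (HdW : forall n, sq_summable (wscale m (fminus (a n) f))) by (intros; apply sq_summable_wscale_minus; auto).
  destruct (HC (eps/2)) as [N1 H1]; [lra|]. destruct (Hc (eps/8)) as [N2 H2]; [lra|].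
  exists (max N1 N2). intros n k Hn Hk.
  rewrite sqnorm_evec by (apply sq_summable_evec_minus; auto).
  specialize (H1 k n ltac:(lia) ltac:(lia)).
  pose proof (H2 k ltac:(lia)) as H2k. pose proof (H2 n ltac:(lia)) as H2n. unfold R_dist in *. rewrite Rminus_0_r in *.
  assert (sqnorm (wscale m (fminus (a k) (a n))) <=
          2 * sqnorm (wscale m (fminus (a k) f)) + 2 * sqnorm (wscale m (fminus (a n) f))).
  { rewrite (sqnorm_ext _ (fun i => wscale m (a k) i - wscale m (a n) i)) by (intros; apply wscale_minus).
    eapply Rle_trans; [apply (sqnorm_triangle _ (wscale m f))|].
    - apply (sq_summable_ext (wscale m (fminus (a k) f))); [intros; apply wscale_minus| auto].
    - apply (sq_summable_ext (wscale m (fminus f (a n)))); [intros; apply wscale_minus| apply sq_summable_wscale_minus; auto].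
    - rewrite (sqnorm_ext (fun i => wscale m (a k) i - wscale m f i) (wscale m (fminus (a k) f)))
        by (intros; symmetry; apply wscale_minus).
      rewrite (sqnorm_minus_sym (wscale m f)).
      rewrite (sqnorm_ext (fun i => wscale m (a n) i - wscale m f i) (wscale m (fminus (a n) f)))
        by (intros; symmetry; apply wscale_minus).
      lra. }
  pose proof (Rle_abs (sqnorm (wscale m (fminus (a k) f)))).
  pose proof (Rle_abs (sqnorm (wscale m (fminus (a n) f)))). lra.
Qed.

(* Fatou's lemma is what makes the energy closable: energy-Cauchy sequences converge in
   energy to their pointwise limit. *)
Lemma evec_cv_of_cauchy {V} m b c (f : V -> R) (a : nat -> V -> R) :
  (forall x, Un_cv (fun n => a n x) (f x)) -> (forall n, sq_summable (evec m b c (a n))) ->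
  (forall eps, eps > 0 -> exists N, forall n k, (n >= N)%nat -> (k >= N)%nat ->
        sqnorm (evec m b c (fminus (a k) (a n))) < eps) ->
  sq_summable (evec m b c f) /\ Un_cv (fun n => sqnorm (evec m b c (fminus (a n) f))) 0.
Proof.
  intros Hpt Ha HCT.
  assert (Hfat : forall eps, eps > 0 -> exists N, forall n, (n >= N)%nat ->
      sq_summable (evec m b c (fminus f (a n))) /\ sqnorm (evec m b c (fminus f (a n))) <= eps).
  { intros eps He. destruct (HCT eps He) as [N HN]. exists N. intros n Hn.
    apply (sqnorm_fatou (fun k => evec m b c (fminus (a k) (a n))) _ N eps).
    - apply evec_cv. intros x. unfold fminus. apply CV_minus; [auto| apply Un_cv_const].
    - intros k Hk. split; [apply sq_summable_evec_minus; auto| left; apply HN; auto]. }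
  destruct (Hfat 1 ltac:(lra)) as [N0 HN0]. destruct (HN0 N0 (le_n _)) as [Hs0 _].
  assert (HTf : sq_summable (evec m b c f)).
  { apply (sq_summable_ext (evec m b c (fplus (fminus f (a N0)) (a N0)))).
    - intros [x|[x|p]]; unfold evec, qvec, wscale, grad, fplus, fminus; simpl; ring.
    - apply sq_summable_evec_plus; auto. }
  split; auto.
  intros eps He. destruct (Hfat (eps/2) ltac:(lra)) as [N HN]. exists N. intros n Hn.
  destruct (HN n Hn) as [H1 H2]. unfold R_dist. rewrite Rminus_0_r.
  rewrite (sqnorm_ext_sq _ (evec m b c (fminus f (a n)))) by (intros i; rewrite !evec_minus; ring).
  rewrite Rabs_right; [lra| apply Rle_ge, sqnorm_nonneg; auto].
Qed.

Lemma dirichlet_energy_cv {V} m b c (f : V -> R) (a : nat -> V -> R) :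
  (forall x, 0 < m x) -> sq_summable (wscale m f) ->
  (forall n, sq_summable (evec m b c (a n))) ->
  Un_cv (fun n => sqnorm (wscale m (fminus (a n) f))) 0 ->
  (forall eps, eps > 0 -> exists N, forall n k, (n >= N)%nat -> (k >= N)%nat ->
        sqnorm (qvec b c (fminus (a n) (a k))) < eps) ->
  sq_summable (evec m b c f) /\ Un_cv (fun n => sqnorm (evec m b c (fminus (a n) f))) 0.
Proof.
  intros Hm Hf Ha Hc HC. apply evec_cv_of_cauchy; auto.
  - intros x. assert (HdW : forall n, sq_summable (wscale m (fminus (a n) f)))
      by (intros n; apply sq_summable_wscale_minus; auto; apply (proj1 (sq_summable_evec_iff m b c (a n)) (Ha n))).
    pose proof (pointwise_cv_of_sqnorm m (fun n => fminus (a n) f) Hm HdW Hc x) as H.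
    intros e He. destruct (H e He) as [N HN]; exists N; intros n Hn; specialize (HN n Hn).
    unfold R_dist, fminus in *. rewrite Rminus_0_r in HN; auto.
  - apply (evec_cauchy_of_parts m b c f a); auto.
Qed.

(** * Complex forms versus real energy vectors *)

Definition cRe {V} (u : V -> Defs.C) : V -> R := fun x => fst (u x).
Definition cIm {V} (u : V -> Defs.C) : V -> R := fun x => snd (u x).

Lemma wscale_mult {V} (w f g : V -> R) x : 0 <= w x -> wscale w f x * wscale w g x = w x * (f x * g x).
Proof. intros H. unfold wscale. replace (sqrt (w x) * f x * (sqrt (w x) * g x)) with ((sqrt (w x) * sqrt (w x)) * (f x * g x)) by ring.
  rewrite sqrt_sqrt; auto. Qed.

Lemma grad_mult {V} (b : V -> V -> R) f g p : 0 <= b (fst p) (snd p) ->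
  grad b f p * grad b g p = b (fst p) (snd p) / 2 * ((f (fst p) - f (snd p)) * (g (fst p) - g (snd p))).
Proof. intros H. unfold grad.
  match goal with |- ?s * ?A * (?s' * ?B) = _ => replace (s * A * (s' * B)) with ((s * s') * (A * B)) by ring end.
  rewrite sqrt_sqrt; [auto|lra]. Qed.

Lemma summable_sqsum_iff {I} (F g h : I -> R) k : k > 0 -> (forall i, F i = k * (g i * g i + h i * h i)) ->
  (summable F <-> sq_summable g /\ sq_summable h).
Proof.
  intros Hk H. split.
  - intros HF. split.
    + apply (summable_compare _ (fun i => /k * F i)); [|apply summable_scal; auto].
      intros i; rewrite H. split; [nra|]. replace (/ k * (k * (g i * g i + h i * h i))) with (g i * g i + h i * h i) by (field; lra). nra.
    + apply (summable_compare _ (fun i => /k * F i)); [|apply summable_scal; auto].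
      intros i; rewrite H. split; [nra|]. replace (/ k * (k * (g i * g i + h i * h i))) with (g i * g i + h i * h i) by (field; lra). nra.
  - intros [H1 H2]. apply (summable_ext (fun i => k * (g i * g i + h i * h i))); [intros; auto|].
    apply summable_scal, summable_plus; auto.
Qed.

Lemma tsum_sqsum {I} (F g h : I -> R) k : (forall i, F i = k * (g i * g i + h i * h i)) -> sq_summable g -> sq_summable h ->
  tsum F = k * (sqnorm g + sqnorm h).
Proof. intros H H1 H2. rewrite (tsum_ext _ (fun i => k * (g i * g i + h i * h i))) by auto.
  rewrite tsum_scal, tsum_plus; auto. apply summable_plus; auto. Qed.

Lemma l2_iff {V} (m : V -> R) (u : V -> Defs.C) : (forall x, 0 <= m x) ->
  (l2 m u <-> sq_summable (wscale m (cRe u)) /\ sq_summable (wscale m (cIm u))).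
Proof. intros Hm. apply (summable_sqsum_iff _ _ _ 1); [lra|]. intros x. rewrite !wscale_mult by auto.
  unfold Cnorm2, cRe, cIm. ring. Qed.

Lemma l2norm2_eq {V} (m : V -> R) (u : V -> Defs.C) : (forall x, 0 <= m x) -> l2 m u ->
  l2norm2 m u = sqnorm (wscale m (cRe u)) + sqnorm (wscale m (cIm u)).
Proof. intros Hm H. apply l2_iff in H; auto. destruct H. unfold l2norm2.
  rewrite (tsum_sqsum _ (wscale m (cRe u)) (wscale m (cIm u)) 1); auto; [ring|].
  intros x. rewrite !wscale_mult by auto. unfold Cnorm2, cRe, cIm. ring. Qed.

Lemma QN_dom_iff {V} (m : V -> R) b c (u : V -> Defs.C) :
  (forall x, 0 <= m x) -> (forall x y, 0 <= b x y) -> (forall x, 0 <= c x) ->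
  (QN_dom m b c u <-> sq_summable (evec m b c (cRe u)) /\ sq_summable (evec m b c (cIm u))).
Proof.
  intros Hm Hb Hc. unfold QN_dom. rewrite l2_iff by auto.
  rewrite !sq_summable_evec_iff. unfold qvec. rewrite !(sq_summable_sum_iff (fun i => match i with inl x => _ | inr p => _ end)).
  assert (E1 : summable (fun p : V * V => b (fst p) (snd p) * Cnorm2 (Csub (u (fst p)) (u (snd p))))
     <-> sq_summable (grad b (cRe u)) /\ sq_summable (grad b (cIm u))).
  { apply (summable_sqsum_iff _ _ _ 2); [lra|]. intros p. rewrite !grad_mult by auto. unfold Cnorm2, Csub, cRe, cIm; simpl. field. }
  assert (E2 : summable (fun x => c x * Cnorm2 (u x)) <-> sq_summable (wscale c (cRe u)) /\ sq_summable (wscale c (cIm u))).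
  { apply (summable_sqsum_iff _ _ _ 1); [lra|]. intros x. rewrite !wscale_mult by auto. unfold Cnorm2, cRe, cIm; simpl. ring. }
  rewrite E1, E2. simpl. tauto.
Qed.

Lemma tsum_edge_inner {V} (b : V -> V -> R) f g : (forall x y, 0 <= b x y) -> sq_summable (grad b f) -> sq_summable (grad b g) ->
  summable (fun p : V * V => b (fst p) (snd p) * ((f (fst p) - f (snd p)) * (g (fst p) - g (snd p)))) /\
  tsum (fun p : V * V => b (fst p) (snd p) * ((f (fst p) - f (snd p)) * (g (fst p) - g (snd p)))) = 2 * inner (grad b f) (grad b g).
Proof.
  intros Hb H1 H2. assert (E : forall p : V * V, b (fst p) (snd p) * ((f (fst p) - f (snd p)) * (g (fst p) - g (snd p)))
     = 2 * (grad b f p * grad b g p)) by (intros; rewrite grad_mult by auto; field).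
  split. - apply (summable_ext (fun p => 2 * (grad b f p * grad b g p))); [intros; auto|]. apply summable_scal, sq_summable_prod; auto.
  - rewrite (tsum_ext _ _ E). unfold inner. apply tsum_scal, sq_summable_prod; auto.
Qed.

Lemma tsum_potential_inner {V} (c : V -> R) f g : (forall x, 0 <= c x) -> sq_summable (wscale c f) -> sq_summable (wscale c g) ->
  summable (fun x => c x * (f x * g x)) /\ tsum (fun x => c x * (f x * g x)) = inner (wscale c f) (wscale c g).
Proof.
  intros Hc H1 H2. assert (E : forall x, c x * (f x * g x) = wscale c f x * wscale c g x) by (intros; rewrite wscale_mult; auto).
  split. - apply (summable_ext (fun x => wscale c f x * wscale c g x)); [intros; auto|]. apply sq_summable_prod; auto.
  - rewrite (tsum_ext _ _ E). reflexivity.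
Qed.

Lemma inner_qvec {V} b c (f g : V -> R) : sq_summable (qvec b c f) -> sq_summable (qvec b c g) ->
  inner (qvec b c f) (qvec b c g) = inner (wscale c f) (wscale c g) + inner (grad b f) (grad b g).
Proof. intros H1 H2. apply (inner_sum (qvec b c f) (qvec b c g)); auto. Qed.

Lemma inner_sym {I} (g h : I -> R) : inner g h = inner h g.
Proof. unfold inner; apply tsum_ext; intros; ring. Qed.

Lemma QN_val_inner {V} (m : V -> R) b c (u v : V -> Defs.C) :
  (forall x y, 0 <= b x y) -> (forall x, 0 <= c x) ->
  sq_summable (qvec b c (cRe u)) -> sq_summable (qvec b c (cIm u)) -> sq_summable (qvec b c (cRe v)) -> sq_summable (qvec b c (cIm v)) ->
  QN_val b c u v = (inner (qvec b c (cRe u)) (qvec b c (cRe v)) + inner (qvec b c (cIm u)) (qvec b c (cIm v)),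
                    inner (qvec b c (cIm u)) (qvec b c (cRe v)) - inner (qvec b c (cRe u)) (qvec b c (cIm v))).
Proof.
  intros Hb Hc H1 H2 H3 H4.
  pose proof (proj1 (sq_summable_sum_iff _) H1) as [W1 E1]. pose proof (proj1 (sq_summable_sum_iff _) H2) as [W2 E2].
  pose proof (proj1 (sq_summable_sum_iff _) H3) as [W3 E3]. pose proof (proj1 (sq_summable_sum_iff _) H4) as [W4 E4].
  simpl in *. change (sq_summable (wscale c (cRe u))) in W1. change (sq_summable (wscale c (cIm u))) in W2.
  change (sq_summable (wscale c (cRe v))) in W3. change (sq_summable (wscale c (cIm v))) in W4.
  change (sq_summable (grad b (cRe u))) in E1. change (sq_summable (grad b (cIm u))) in E2.
  change (sq_summable (grad b (cRe v))) in E3. change (sq_summable (grad b (cIm v))) in E4.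
  rewrite !inner_qvec by auto.
  destruct (tsum_edge_inner b _ _ Hb E1 E3) as [S13 T13].
  destruct (tsum_edge_inner b _ _ Hb E2 E4) as [S24 T24].
  destruct (tsum_edge_inner b _ _ Hb E2 E3) as [S23 T23].
  destruct (tsum_edge_inner b _ _ Hb E1 E4) as [S14 T14].
  destruct (tsum_potential_inner c _ _ Hc W1 W3) as [C13 U13].
  destruct (tsum_potential_inner c _ _ Hc W2 W4) as [C24 U24].
  destruct (tsum_potential_inner c _ _ Hc W2 W3) as [C23 U23].
  destruct (tsum_potential_inner c _ _ Hc W1 W4) as [C14 U14].
  unfold QN_val, Cadd, Cscal, tsumC; simpl. f_equal.
  - rewrite (tsum_ext _ (fun p : V * V => b (fst p) (snd p) * ((cRe u (fst p) - cRe u (snd p)) * (cRe v (fst p) - cRe v (snd p)))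
        + b (fst p) (snd p) * ((cIm u (fst p) - cIm u (snd p)) * (cIm v (fst p) - cIm v (snd p)))))
      by (intros; unfold cRe, cIm; simpl; ring).
    rewrite (tsum_ext (fun x => c x * _) (fun x => c x * (cRe u x * cRe v x) + c x * (cIm u x * cIm v x)))
      by (intros; unfold cRe, cIm; simpl; ring).
    rewrite !tsum_plus by auto. rewrite T13, T24, U13, U24. field.
  - rewrite (tsum_ext _ (fun p : V * V => b (fst p) (snd p) * ((cIm u (fst p) - cIm u (snd p)) * (cRe v (fst p) - cRe v (snd p)))
        - b (fst p) (snd p) * ((cRe u (fst p) - cRe u (snd p)) * (cIm v (fst p) - cIm v (snd p)))))
      by (intros; unfold cRe, cIm; simpl; ring).
    rewrite (tsum_ext (fun x => c x * _) (fun x => c x * (cIm u x * cRe v x) - c x * (cRe u x * cIm v x)))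
      by (intros; unfold cRe, cIm; simpl; ring).
    rewrite !tsum_minus by auto. rewrite T23, T14, U23, U14. field.
Qed.

Lemma QN_val_diag {V} (m : V -> R) b c (w : V -> Defs.C) :
  (forall x y, 0 <= b x y) -> (forall x, 0 <= c x) ->
  sq_summable (qvec b c (cRe w)) -> sq_summable (qvec b c (cIm w)) ->
  QN_val b c w w = (sqnorm (qvec b c (cRe w)) + sqnorm (qvec b c (cIm w)), 0).
Proof. intros Hb Hc H1 H2. rewrite (QN_val_inner m) by auto. f_equal.
  rewrite (inner_sym (qvec b c (cIm w))). ring. Qed.

Lemma sq_summable_qvec {V} m b c (f : V -> R) : sq_summable (evec m b c f) -> sq_summable (qvec b c f).
Proof. intros H; apply sq_summable_evec_iff in H; tauto. Qed.
Lemma sq_summable_wscale {V} m b c (f : V -> R) : sq_summable (evec m b c f) -> sq_summable (wscale m f).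
Proof. intros H; apply sq_summable_evec_iff in H; tauto. Qed.

Lemma component_l2 {V} (m : V -> R) pr (w : V -> Defs.C) :
  (forall x, 0 <= m x) -> (pr = fst \/ pr = snd) -> l2 m w ->
  sq_summable (wscale m (fun x => pr (w x))) /\ sqnorm (wscale m (fun x => pr (w x))) <= l2norm2 m w.
Proof.
  intros Hm Hpr h. rewrite l2norm2_eq by auto. apply l2_iff in h; auto. destruct h as [h1 h2].
  pose proof (sqnorm_nonneg _ h1). pose proof (sqnorm_nonneg _ h2).
  destruct Hpr; subst; unfold cRe, cIm in *; split; auto; lra.
Qed.

Lemma component_QN_dom {V} (m : V -> R) b c pr (w : V -> Defs.C) :
  (forall x, 0 <= m x) -> (forall x y, 0 <= b x y) -> (forall x, 0 <= c x) -> (pr = fst \/ pr = snd) ->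
  QN_dom m b c w -> sq_summable (evec m b c (fun x => pr (w x))).
Proof. intros Hm Hb Hc Hpr h. apply QN_dom_iff in h; auto. destruct Hpr; subst; tauto. Qed.

Lemma component_QN_val_le {V} (m : V -> R) b c pr (w : V -> Defs.C) :
  (forall x, 0 <= m x) -> (forall x y, 0 <= b x y) -> (forall x, 0 <= c x) -> (pr = fst \/ pr = snd) ->
  QN_dom m b c w ->
  sqnorm (qvec b c (fun x => pr (w x))) <= fst (QN_val b c w w) /\ snd (QN_val b c w w) = 0.
Proof.
  intros Hm Hb Hc Hpr h. apply QN_dom_iff in h; auto. destruct h as [h1 h2].
  apply sq_summable_qvec in h1. apply sq_summable_qvec in h2.
  rewrite (QN_val_diag m) by auto. simpl. pose proof (sqnorm_nonneg _ h1). pose proof (sqnorm_nonneg _ h2).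
  destruct Hpr; subst; unfold cRe, cIm in *; split; auto; lra.
Qed.

Lemma approx_component {V} (m : V -> R) b c pr un (u : V -> Defs.C) :
  (forall x, 0 < m x) -> (forall x y, 0 <= b x y) -> (forall x, 0 <= c x) ->
  (pr = fst \/ pr = snd) ->
  l2 m u -> approx m (restrict_Cc (QN m b c)) un u ->
  sq_summable (wscale m (fun x => pr (u x))) /\
  (forall n, finsupp_real (fun x => pr (un n x)) /\ sq_summable (evec m b c (fun x => pr (un n x)))) /\
  Un_cv (fun n => sqnorm (wscale m (fminus (fun x => pr (un n x)) (fun x => pr (u x))))) 0 /\
  (forall eps, eps > 0 -> exists N, forall n k, (n >= N)%nat -> (k >= N)%nat ->
        sqnorm (qvec b c (fminus (fun x => pr (un n x)) (fun x => pr (un k x)))) < eps).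
Proof.
  intros Hm Hb Hc Hpr Hu [Hd [Hl [Hcv HC]]].
  assert (Hm0 : forall x, 0 <= m x) by (intros x; specialize (Hm x); lra).
  assert (Hsub : forall z w, pr (Csub z w) = pr z - pr w) by (intros; destruct Hpr; subst; reflexivity).
  split; [apply component_l2; auto|]. split; [|split].
  - intros n. destruct (Hd n) as [[l Hfl] HQ]. split; [|apply (component_QN_dom m); auto].
    exists l. intros x h. apply Hfl. intros e. rewrite e in h. destruct Hpr; subst; simpl in h; lra.
  - apply (Un_cv_0_squeeze _ (fun n => l2norm2 m (fsub (un n) u))); auto.
    intros n. destruct (component_l2 m pr (fsub (un n) u) Hm0 Hpr (Hl n)) as [h1 h2].
    rewrite (sqnorm_ext _ (wscale m (fun x => pr (fsub (un n) u x))))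
      by (intros; unfold wscale, fminus, fsub; rewrite Hsub; auto).
    split; [apply sqnorm_nonneg|]; auto.
  - intros e He. destruct (HC (e*e)) as [N HN]; [nra|]. exists N. intros n k Hn Hk. specialize (HN n k Hn Hk).
    simpl in HN.
    assert (Hdom : QN_dom m b c (fsub (un n) (un k))).
    { destruct (Hd n) as [_ h1], (Hd k) as [_ h2]. simpl in h1, h2.
      apply QN_dom_iff in h1; auto. apply QN_dom_iff in h2; auto.
      apply QN_dom_iff; auto. destruct h1, h2. split; apply sq_summable_evec_minus; auto. }
    destruct (component_QN_val_le m b c pr _ Hm0 Hb Hc Hpr Hdom) as [h1 h2].
    assert (h0 : 0 <= sqnorm (qvec b c (fun x => pr (fsub (un n) (un k) x)))).
    { apply sqnorm_nonneg, sq_summable_qvec with (m := m), (component_QN_dom m); auto. }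
    rewrite (sqnorm_ext _ (qvec b c (fun x => pr (fsub (un n) (un k) x)))) by
      (intros [x|p]; unfold qvec, wscale, grad, fminus, fsub; rewrite ?Hsub; auto).
    unfold Cnorm2 in HN. rewrite h2 in HN.
    destruct (Rlt_le_dec (fst (QN_val b c (fsub (un n) (un k)) (fsub (un n) (un k)))) e); [lra|]. nra.
Qed.

Lemma QD_dirichlet_parts {V} (m : V -> R) b c (u : V -> Defs.C) :
  (forall x, 0 < m x) -> (forall x y, 0 <= b x y) -> (forall x, 0 <= c x) ->
  fdom (QD m b c) u -> dirichlet m b c (cRe u) /\ dirichlet m b c (cIm u).
Proof.
  intros Hm Hb Hc [Hl [un Ha]]. split.
  - destruct (approx_component m b c fst un u Hm Hb Hc (or_introl eq_refl) Hl Ha) as [h1 [h2 [h3 h4]]].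
    split; auto. exists (fun n x => fst (un n x)). auto.
  - destruct (approx_component m b c snd un u Hm Hb Hc (or_intror eq_refl) Hl Ha) as [h1 [h2 [h3 h4]]].
    split; auto. exists (fun n x => snd (un n x)). auto.
Qed.

Lemma QD_dom_QN_dom {V} (m : V -> R) b c (u : V -> Defs.C) :
  (forall x, 0 < m x) -> (forall x y, 0 <= b x y) -> (forall x, 0 <= c x) ->
  fdom (QD m b c) u -> QN_dom m b c u.
Proof.
  intros Hm Hb Hc H. assert (Hm0 : forall x, 0 <= m x) by (intros x; specialize (Hm x); lra).
  destruct (QD_dirichlet_parts m b c u Hm Hb Hc H) as [[h1 [a [h2 [h3 h4]]]] [k1 [a' [k2 [k3 k4]]]]].
  apply QN_dom_iff; auto. split.
  - apply (dirichlet_energy_cv m b c _ a); auto. intros; apply h2.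
  - apply (dirichlet_energy_cv m b c _ a'); auto. intros; apply k2.
Qed.

Lemma approx_qvec_cv {V} (m : V -> R) b c pr un (u : V -> Defs.C) :
  (forall x, 0 < m x) -> (forall x y, 0 <= b x y) -> (forall x, 0 <= c x) ->
  (pr = fst \/ pr = snd) ->
  l2 m u -> approx m (restrict_Cc (QN m b c)) un u ->
  Un_cv (fun n => sqnorm (qvec b c (fminus (fun x => pr (un n x)) (fun x => pr (u x))))) 0.
Proof.
  intros Hm Hb Hc Hpr Hl Ha.
  destruct (approx_component m b c pr un u Hm Hb Hc Hpr Hl Ha) as [h1 [h2 [h3 h4]]].
  destruct (dirichlet_energy_cv m b c _ (fun n x => pr (un n x)) Hm h1 (fun n => proj2 (h2 n)) h3 h4) as [Hs Hcv].
  intros e He. destruct (Hcv e He) as [N HN]. exists N. intros n Hn. specialize (HN n Hn).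
  unfold R_dist in *. rewrite Rminus_0_r in *.
  assert (Hd : sq_summable (evec m b c (fminus (fun x => pr (un n x)) (fun x => pr (u x))))) by (apply sq_summable_evec_minus; auto; apply h2).
  rewrite sqnorm_evec in HN by auto. apply sq_summable_evec_iff in Hd. destruct Hd as [d1 d2].
  pose proof (sqnorm_nonneg _ d1). pose proof (sqnorm_nonneg _ d2).
  rewrite Rabs_right in * by (apply Rle_ge; lra). lra.
Qed.

Lemma Cnorm2_cv_unique (w : nat -> Defs.C) z z' :
  Un_cv (fun n => Cnorm2 (Csub (w n) z)) 0 -> Un_cv (fun n => Cnorm2 (Csub (w n) z')) 0 -> z = z'.
Proof.
  intros H1 H2. destruct z as [z1 z2], z' as [y1 y2].
  set (D := (z1 - y1) * (z1 - y1) + (z2 - y2) * (z2 - y2)).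
  assert (HD : D <= 0).
  { destruct (Rle_lt_dec D 0) as [|HD]; auto. exfalso.
    destruct (H1 (D/4)) as [N1 h1]; [lra|]. destruct (H2 (D/4)) as [N2 h2]; [lra|].
    specialize (h1 (max N1 N2) ltac:(lia)). specialize (h2 (max N1 N2) ltac:(lia)).
    unfold R_dist, Cnorm2, Csub in *; simpl in *. rewrite Rminus_0_r in *.
    destruct (w (max N1 N2)) as [w1 w2]; simpl in *.
    pose proof (Rle_abs ((w1 - z1) * (w1 - z1) + (w2 - z2) * (w2 - z2))).
    pose proof (Rle_abs ((w1 - y1) * (w1 - y1) + (w2 - y2) * (w2 - y2))).
    pose proof (Rle_0_sqr (2*w1 - z1 - y1)). pose proof (Rle_0_sqr (2*w2 - z2 - y2)). unfold Rsqr in *. unfold D in *. nra. }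
  unfold D in HD. pose proof (Rle_0_sqr (z1 - y1)). pose proof (Rle_0_sqr (z2 - y2)). unfold Rsqr in *.
  f_equal; apply Rminus_diag_uniq; apply Rsqr_0_uniq; unfold Rsqr; lra.
Qed.

Lemma Cnorm2_cv (q : nat -> Defs.C) z : Un_cv (fun n => fst (q n)) (fst z) -> Un_cv (fun n => snd (q n)) (snd z) ->
  Un_cv (fun n => Cnorm2 (Csub (q n) z)) 0.
Proof.
  intros H1 H2. unfold Cnorm2, Csub; simpl. replace 0 with ((fst z - fst z) * (fst z - fst z) + (snd z - snd z) * (snd z - snd z)) by ring.
  apply CV_plus; apply CV_mult; apply CV_minus; auto using Un_cv_const.
Qed.

Lemma approx_QN_val_cv {V} (m : V -> R) b c (u v : V -> Defs.C) un vn :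
  (forall x, 0 < m x) -> (forall x y, 0 <= b x y) -> (forall x, 0 <= c x) ->
  fdom (QD m b c) u -> fdom (QD m b c) v ->
  approx m (restrict_Cc (QN m b c)) un u -> approx m (restrict_Cc (QN m b c)) vn v ->
  Un_cv (fun n => Cnorm2 (Csub (QN_val b c (un n) (vn n)) (QN_val b c u v))) 0.
Proof.
  intros Hm Hb Hc Hu Hv Hau Hav.
  assert (Hm0 : forall x, 0 <= m x) by (intros x; specialize (Hm x); lra).
  assert (Hq : forall w, QN_dom m b c w -> sq_summable (qvec b c (cRe w)) /\ sq_summable (qvec b c (cIm w))).
  { intros w h. apply QN_dom_iff in h; auto. destruct h; split; eapply sq_summable_qvec; eauto. }
  pose proof (Hq u (QD_dom_QN_dom m b c u Hm Hb Hc Hu)) as [qu1 qu2].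
  pose proof (Hq v (QD_dom_QN_dom m b c v Hm Hb Hc Hv)) as [qv1 qv2].
  assert (qun : forall n, sq_summable (qvec b c (cRe (un n))) /\ sq_summable (qvec b c (cIm (un n))))
    by (intros n; apply Hq, (proj1 Hau n)).
  assert (qvn : forall n, sq_summable (qvec b c (cRe (vn n))) /\ sq_summable (qvec b c (cIm (vn n))))
    by (intros n; apply Hq, (proj1 Hav n)).
  assert (Hcv : forall pr w z, (pr = fst \/ pr = snd) -> fdom (QD m b c) z -> approx m (restrict_Cc (QN m b c)) w z ->
      Un_cv (fun n => sqnorm (fun i => qvec b c (fun x => pr (w n x)) i - qvec b c (fun x => pr (z x)) i)) 0).
  { intros pr w z Hpr Hz Ha. eapply Un_cv_ext; [|apply (approx_qvec_cv m b c pr w z); auto; apply Hz].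
    intros n; apply sqnorm_ext; intros; apply qvec_minus. }
  assert (Hval : forall n, QN_val b c (un n) (vn n) =
      (inner (qvec b c (cRe (un n))) (qvec b c (cRe (vn n))) + inner (qvec b c (cIm (un n))) (qvec b c (cIm (vn n))),
       inner (qvec b c (cIm (un n))) (qvec b c (cRe (vn n))) - inner (qvec b c (cRe (un n))) (qvec b c (cIm (vn n))))).
  { intros n. apply (QN_val_inner m); auto; apply qun || apply qvn. }
  rewrite (QN_val_inner m) by auto.
  apply Cnorm2_cv.
  - apply (Un_cv_ext (fun n => inner (qvec b c (cRe (un n))) (qvec b c (cRe (vn n)))
                             + inner (qvec b c (cIm (un n))) (qvec b c (cIm (vn n)))));
      [intros n; rewrite Hval; reflexivity|].
    apply CV_plus; apply inner_cv; auto; try (intros n; apply qun || apply qvn); apply Hcv; auto.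
  - apply (Un_cv_ext (fun n => inner (qvec b c (cIm (un n))) (qvec b c (cRe (vn n)))
                             - inner (qvec b c (cRe (un n))) (qvec b c (cIm (vn n)))));
      [intros n; rewrite Hval; reflexivity|].
    apply CV_minus; apply inner_cv; auto; try (intros n; apply qun || apply qvn); apply Hcv; auto.
Qed.

Lemma QD_val_QN_val {V} (m : V -> R) b c (u v : V -> Defs.C) :
  (forall x, 0 < m x) -> (forall x y, 0 <= b x y) -> (forall x, 0 <= c x) ->
  fdom (QD m b c) u -> fdom (QD m b c) v -> fval (QD m b c) u v = QN_val b c u v.
Proof.
  intros Hm Hb Hc Hu Hv.
  set (P := fun z => forall un vn, approx m (restrict_Cc (QN m b c)) un u -> approx m (restrict_Cc (QN m b c)) vn v ->
         Un_cv (fun n => Cnorm2 (Csub (fval (restrict_Cc (QN m b c)) (un n) (vn n)) z)) 0).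
  assert (HP : P (QN_val b c u v)) by (intros un vn; apply approx_QN_val_cv; auto).
  simpl. fold (restrict_Cc (QN m b c)). change (epsilon (inhabits C0) P = QN_val b c u v).
  assert (HP' : P (epsilon (inhabits C0) P)) by (apply epsilon_spec; exists (QN_val b c u v); auto).
  destruct Hu as [_ [un Hau]], Hv as [_ [vn Hav]].
  apply (Cnorm2_cv_unique (fun n => fval (restrict_Cc (QN m b c)) (un n) (vn n))); [apply HP'|apply HP]; auto.
Qed.

Lemma QN_dom_outside_QD {V} (m : V -> R) b c :
  (forall x, 0 < m x) -> (forall x y, 0 <= b x y) -> (forall x, 0 <= c x) ->
  ~ form_eq (QN m b c) (QD m b c) -> exists u, QN_dom m b c u /\ ~ fdom (QD m b c) u.
Proof.
  intros Hm Hb Hc Hne. destruct (classic (exists u, QN_dom m b c u /\ ~ fdom (QD m b c) u)) as [|Hno]; auto.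
  exfalso. apply Hne.
  assert (Hin : forall u, QN_dom m b c u -> fdom (QD m b c) u).
  { intros u h. destruct (classic (fdom (QD m b c) u)); auto. exfalso; apply Hno; eauto. }
  split.
  - intros u; split; intro h; [apply Hin; auto| apply (QD_dom_QN_dom m b c u Hm Hb Hc h)].
  - intros u v hu hv. simpl in *. symmetry. apply QD_val_QN_val; auto; apply Hin; auto.
Qed.

Lemma sqnorm_zero {I} (g : I -> R) : (forall i, g i = 0) -> sq_summable g /\ sqnorm g = 0.
Proof.
  intros H. assert (Hs : has_sum (fun i => g i * g i) 0).
  { intros e He. exists []. intros l _ _. replace (sum_list (fun i => g i * g i) l) with 0.
    rewrite Rminus_0_r, Rabs_R0; auto. induction l; simpl; auto. rewrite H, <- IHl; ring. }
  split; [exists 0; auto| apply tsum_eq; auto].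
Qed.

Lemma sqnorm_wscale_le {V} m b c (f : V -> R) : sq_summable (evec m b c f) -> sqnorm (wscale m f) <= sqnorm (evec m b c f).
Proof. intros H. rewrite sqnorm_evec by auto. apply sq_summable_evec_iff in H. destruct H. pose proof (sqnorm_nonneg _ H0). lra. Qed.
Lemma sqnorm_qvec_le {V} m b c (f : V -> R) : sq_summable (evec m b c f) -> sqnorm (qvec b c f) <= sqnorm (evec m b c f).
Proof. intros H. rewrite sqnorm_evec by auto. apply sq_summable_evec_iff in H. destruct H. pose proof (sqnorm_nonneg _ H). lra. Qed.

Lemma dirichlet_pair_QD {V} (m : V -> R) b c (f g : V -> R) :
  (forall x, 0 < m x) -> (forall x y, 0 <= b x y) -> (forall x, 0 <= c x) ->
  dirichlet m b c f -> dirichlet m b c g -> fdom (QD m b c) (fun x => (f x, g x)).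
Proof.
  intros Hm Hb Hc [Hf [a [Ha1 [Ha2 Ha3]]]] [Hg [a' [Hb1 [Hb2 Hb3]]]].
  assert (Hm0 : forall x, 0 <= m x) by (intros x; specialize (Hm x); lra).
  split; [apply l2_iff; auto|].
  exists (fun n x => (a n x, a' n x)). split; [|split; [|split]].
  - intros n. destruct (Ha1 n) as [[l1 H1] Sa], (Hb1 n) as [[l2 H2] Sa'].
    split.
    + exists (l1 ++ l2). intros x hx. apply in_or_app.
      destruct (Req_dec (a n x) 0) as [e1|e1]; [|left; auto].
      destruct (Req_dec (a' n x) 0) as [e2|e2]; [|right; auto].
      exfalso; apply hx. unfold C0; rewrite e1, e2; auto.
    + simpl. apply QN_dom_iff; auto.
  - intros n. apply l2_iff; auto. split.
    + apply sq_summable_wscale_minus; [apply sq_summable_wscale with (b:=b) (c:=c); apply Ha1| auto].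
    + apply sq_summable_wscale_minus; [apply sq_summable_wscale with (b:=b) (c:=c); apply Hb1| auto].
  - apply (Un_cv_ext (fun n => sqnorm (wscale m (fminus (a n) f)) + sqnorm (wscale m (fminus (a' n) g)))).
    { intros n. rewrite l2norm2_eq; auto. apply l2_iff; auto. split.
      + apply sq_summable_wscale_minus; [apply sq_summable_wscale with (b:=b) (c:=c); apply Ha1| auto].
      + apply sq_summable_wscale_minus; [apply sq_summable_wscale with (b:=b) (c:=c); apply Hb1| auto]. }
    replace 0 with (0 + 0) by ring. apply CV_plus; auto.
  - intros eps He.
    assert (Hs : 0 < sqrt eps) by (apply sqrt_lt_R0; lra).
    destruct (Ha3 (sqrt eps / 2)) as [N1 H1]; [lra|]. destruct (Hb3 (sqrt eps / 2)) as [N2 H2]; [lra|].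
    exists (max N1 N2). intros n k Hn Hk. simpl.
    assert (Hd1 : sq_summable (evec m b c (fminus (a n) (a k)))) by (apply sq_summable_evec_minus; [apply Ha1|apply Ha1]).
    assert (Hd2 : sq_summable (evec m b c (fminus (a' n) (a' k)))) by (apply sq_summable_evec_minus; [apply Hb1|apply Hb1]).
    rewrite (QN_val_diag m) by (auto; apply (sq_summable_qvec m); auto).
    specialize (H1 n k ltac:(lia) ltac:(lia)). specialize (H2 n k ltac:(lia) ltac:(lia)).
    pose proof (sqnorm_nonneg _ (sq_summable_qvec _ _ _ _ Hd1)). pose proof (sqnorm_nonneg _ (sq_summable_qvec _ _ _ _ Hd2)).
    change (sqnorm (qvec b c (cRe (fsub (fun x => (a n x, a' n x)) (fun x => (a k x, a' k x))))))
      with (sqnorm (qvec b c (fminus (a n) (a k)))).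
    change (sqnorm (qvec b c (cIm (fsub (fun x => (a n x, a' n x)) (fun x => (a k x, a' k x))))))
      with (sqnorm (qvec b c (fminus (a' n) (a' k)))).
    unfold Cnorm2; simpl.
    pose proof (sqrt_sqrt eps ltac:(lra)). nra.
Qed.

(** * Closedness of the real Dirichlet domain *)

Lemma dirichlet_ext {V} m b c (f g : V -> R) : (forall x, f x = g x) -> dirichlet m b c f -> dirichlet m b c g.
Proof. intros H. replace g with f; auto. apply functional_extensionality; auto. Qed.

Lemma dirichlet_minus {V} (m : V -> R) b c (f g : V -> R) :
  dirichlet m b c f -> dirichlet m b c g -> dirichlet m b c (fminus f g).
Proof.
  intros [Hf [a [Ha1 [Ha2 Ha3]]]] [Hg [a' [Hb1 [Hb2 Hb3]]]].
  split; [apply sq_summable_wscale_minus; auto|].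
  exists (fun n => fminus (a n) (a' n)). split; [|split].
  - intros n. destruct (Ha1 n) as [[l1 H1] Sa], (Hb1 n) as [[l2 H2] Sa']. split; [|apply sq_summable_evec_minus; auto].
    exists (l1 ++ l2). intros x hx. apply in_or_app. unfold fminus in hx.
    destruct (Req_dec (a n x) 0) as [e1|e1]; [|left; auto].
    destruct (Req_dec (a' n x) 0) as [e2|e2]; [|right; auto]. exfalso; apply hx; rewrite e1, e2; ring.
  - apply (Un_cv_0_squeeze _ (fun n => 2 * sqnorm (wscale m (fminus (a n) f)) + 2 * sqnorm (wscale m (fminus (a' n) g)))).
    + intros n.
      assert (s1 : sq_summable (wscale m (fminus (a n) f))) by (apply sq_summable_wscale_minus; auto; apply (sq_summable_wscale m b c); apply Ha1).
      assert (s2 : sq_summable (wscale m (fminus (a' n) g))) by (apply sq_summable_wscale_minus; auto; apply (sq_summable_wscale m b c); apply Hb1).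
      split.
      * apply sqnorm_nonneg. apply (sq_summable_ext (fun i => wscale m (fminus (a n) f) i + (-1) * wscale m (fminus (a' n) g) i)).
        { intros; unfold wscale, fminus; ring. } apply sq_summable_plus; auto; apply sq_summable_scal; auto.
      * rewrite (sqnorm_ext _ (fun i => wscale m (fminus (a n) f) i + (-1) * wscale m (fminus (a' n) g) i)) by (intros; unfold wscale, fminus; ring).
        eapply Rle_trans; [apply sqnorm_plus_le; auto; apply sq_summable_scal; auto|]. rewrite sqnorm_scal by auto. lra.
    + replace 0 with (2 * 0 + 2 * 0) by ring. apply CV_plus; apply CV_mult; auto using Un_cv_const.
  - intros eps He. destruct (Ha3 (eps/4)) as [N1 H1]; [lra|]. destruct (Hb3 (eps/4)) as [N2 H2]; [lra|].
    exists (max N1 N2). intros n k Hn Hk. specialize (H1 n k ltac:(lia) ltac:(lia)). specialize (H2 n k ltac:(lia) ltac:(lia)).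
    assert (s1 : sq_summable (qvec b c (fminus (a n) (a k)))) by (apply (sq_summable_qvec m); apply sq_summable_evec_minus; [apply Ha1|apply Ha1]).
    assert (s2 : sq_summable (qvec b c (fminus (a' n) (a' k)))) by (apply (sq_summable_qvec m); apply sq_summable_evec_minus; [apply Hb1|apply Hb1]).
    rewrite (sqnorm_ext _ (fun i => qvec b c (fminus (a n) (a k)) i + (-1) * qvec b c (fminus (a' n) (a' k)) i))
      by (intros [x|p]; unfold qvec, wscale, grad, fminus; simpl; ring).
    eapply Rle_lt_trans; [apply sqnorm_plus_le; auto; apply sq_summable_scal; auto|]. rewrite sqnorm_scal by auto. lra.
Qed.

Lemma Un_cv_inv_succ : Un_cv (fun n => / (INR n + 1)) 0.
Proof.
  intros e He. destruct (INR_unbounded (/ e)) as [N HN]. exists N. intros n Hn.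
  unfold R_dist. rewrite Rminus_0_r.
  assert (Hn' : INR N <= INR n) by (apply le_INR; lia).
  pose proof (pos_INR N).
  assert (0 < / e) by (apply Rinv_0_lt_compat; lra).
  rewrite Rabs_right by (apply Rle_ge; left; apply Rinv_0_lt_compat; lra).
  apply (Rmult_lt_reg_r (INR n + 1)); [lra|]. rewrite Rinv_l by lra.
  apply (Rmult_lt_reg_l (/ e)); [auto|]. rewrite <- Rmult_assoc, Rinv_l by lra. lra.
Qed.

Lemma dirichlet_of_energy_cv {V} m b c (g : nat -> V -> R) (f : V -> R) :
  (forall n, finsupp_real (g n) /\ sq_summable (evec m b c (g n))) -> sq_summable (evec m b c f) ->
  Un_cv (fun n => sqnorm (evec m b c (fminus (g n) f))) 0 -> dirichlet m b c f.
Proof.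
  intros Hg Hf Hconv.
  assert (d : forall n k, sq_summable (evec m b c (fminus (g n) (g k)))) by (intros; apply sq_summable_evec_minus; apply Hg).
  assert (df : forall n, sq_summable (evec m b c (fminus (g n) f))) by (intros; apply sq_summable_evec_minus; auto; apply Hg).
  split; [apply (sq_summable_wscale m b c); auto|].
  exists g. split; [|split]; auto.
  - apply (Un_cv_0_squeeze _ (fun n => sqnorm (evec m b c (fminus (g n) f)))); [|exact Hconv]. intros n.
    split; [apply sqnorm_nonneg; apply (sq_summable_wscale m b c); auto| apply sqnorm_wscale_le; auto].
  - intros eps He. destruct (Hconv (eps/4)) as [N HN]; [lra|]. exists N. intros n k Hn Hk.
    pose proof (HN n Hn) as h1. pose proof (HN k Hk) as h2. unfold R_dist in *. rewrite Rminus_0_r in *.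
    eapply Rle_lt_trans; [apply (sqnorm_qvec_le m); auto|].
    rewrite (sqnorm_ext _ (fun i => evec m b c (fminus (g n) f) i + (-1) * evec m b c (fminus (g k) f) i))
        by (intros i; rewrite !evec_minus; ring).
    eapply Rle_lt_trans; [apply sqnorm_plus_le; auto; apply sq_summable_scal; auto|]. rewrite sqnorm_scal by auto.
    pose proof (Rle_abs (sqnorm (evec m b c (fminus (g n) f)))).
    pose proof (Rle_abs (sqnorm (evec m b c (fminus (g k) f)))). lra.
Qed.

Lemma dirichlet_closed {V} (m : V -> R) b c (h : nat -> V -> R) (f : V -> R) :
  (forall x, 0 < m x) -> (forall n, dirichlet m b c (h n)) -> sq_summable (evec m b c f) ->
  Un_cv (fun n => sqnorm (evec m b c (fminus (h n) f))) 0 -> dirichlet m b c f.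
Proof.
  intros Hm Hh Hf Hcv.
  assert (Hap : forall n, exists g, (finsupp_real g /\ sq_summable (evec m b c g)) /\
      sq_summable (evec m b c (h n)) /\ sqnorm (evec m b c (fminus g (h n))) < / (INR n + 1)).
  { intros n. destruct (Hh n) as [hW [a [Ha1 [Ha2 Ha3]]]].
    destruct (dirichlet_energy_cv m b c (h n) a Hm hW (fun k => proj2 (Ha1 k)) Ha2 Ha3) as [HsT Hc].
    destruct (Hc (/ (INR n + 1))) as [N HN]. { apply Rinv_0_lt_compat. pose proof (pos_INR n); lra. }
    exists (a N). split; [apply Ha1|]. split; auto.
    specialize (HN N (le_n _)). unfold R_dist in HN. rewrite Rminus_0_r in HN.
    eapply Rle_lt_trans; [apply Rle_abs| exact HN]. }
  destruct (choice _ Hap) as [g Hg].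
  apply (dirichlet_of_energy_cv m b c g); [intros n; apply Hg| auto|].
  apply (Un_cv_0_squeeze _ (fun n => 2 * (/ (INR n + 1)) + 2 * sqnorm (evec m b c (fminus (h n) f)))).
  - intros n. destruct (Hg n) as [[_ s1] [s2 s3]].
    assert (d1 : sq_summable (evec m b c (fminus (g n) (h n)))) by (apply sq_summable_evec_minus; auto).
    assert (d2 : sq_summable (evec m b c (fminus (h n) f))) by (apply sq_summable_evec_minus; auto).
    split; [apply sqnorm_nonneg; apply sq_summable_evec_minus; auto|].
    rewrite (sqnorm_ext _ (fun i => evec m b c (fminus (g n) (h n)) i + evec m b c (fminus (h n) f) i))
      by (intros i; rewrite !evec_minus; ring).
    eapply Rle_trans; [apply sqnorm_plus_le; auto|]. lra.
  - replace 0 with (2 * 0 + 2 * 0) by ring.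
    apply CV_plus; apply CV_mult; auto using Un_cv_const, Un_cv_inv_succ.
Qed.

(** * Normal contractions *)

Lemma evec_abs_le {V} m b c (f g : V -> R) :
  (forall x, Rabs (g x) <= Rabs (f x)) -> (forall x y, Rabs (g x - g y) <= Rabs (f x - f y)) ->
  forall i, Rabs (evec m b c g i) <= Rabs (evec m b c f i).
Proof.
  intros H1 H2 [x|[x|p]]; unfold evec, qvec, wscale, grad; simpl; rewrite !Rabs_mult; apply Rmult_le_compat_l; auto; apply Rabs_pos.
Qed.

Lemma evec_contraction {V} m b c (f g : V -> R) :
  (forall x, Rabs (g x) <= Rabs (f x)) -> (forall x y, Rabs (g x - g y) <= Rabs (f x - f y)) ->
  sq_summable (evec m b c f) -> sq_summable (evec m b c g) /\ sqnorm (evec m b c g) <= sqnorm (evec m b c f).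
Proof.
  intros H1 H2 Hf. apply sqnorm_compare; auto.
  intros [x|[x|p]]; unfold evec, qvec, wscale, grad; simpl; rewrite !Rabs_mult; apply Rmult_le_compat_l; auto; apply Rabs_pos.
Qed.

Lemma Rmax0_lip (a b : R) : Rabs (Rmax a 0 - Rmax b 0) <= Rabs (a - b).
Proof. unfold Rmax; repeat destruct Rle_dec; unfold Rabs; repeat destruct Rcase_abs; lra. Qed.
Lemma Rmin_lip (a b n : R) : Rabs (Rmin a n - Rmin b n) <= Rabs (a - b).
Proof. unfold Rmin; repeat destruct Rle_dec; unfold Rabs; repeat destruct Rcase_abs; lra. Qed.
Lemma Rmax0_abs (a : R) : Rabs (Rmax a 0) <= Rabs a.
Proof. unfold Rmax; repeat destruct Rle_dec; unfold Rabs; repeat destruct Rcase_abs; lra. Qed.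

Lemma real_outside_dirichlet {V} (m : V -> R) b c :
  (forall x, 0 < m x) -> (forall x y, 0 <= b x y) -> (forall x, 0 <= c x) ->
  ~ form_eq (QN m b c) (QD m b c) -> exists f, sq_summable (evec m b c f) /\ ~ dirichlet m b c f.
Proof.
  intros Hm Hb Hc Hne. assert (Hm0 : forall x, 0 <= m x) by (intros x; specialize (Hm x); lra).
  destruct (QN_dom_outside_QD m b c Hm Hb Hc Hne) as [u [Hu Hnu]].
  apply QN_dom_iff in Hu; auto. destruct Hu as [H1 H2].
  destruct (classic (dirichlet m b c (cRe u))) as [R1|R1]; [|exists (cRe u); auto].
  destruct (classic (dirichlet m b c (cIm u))) as [R2|R2]; [|exists (cIm u); auto].
  exfalso. apply Hnu. pose proof (dirichlet_pair_QD m b c _ _ Hm Hb Hc R1 R2) as HQ.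
  replace u with (fun x => (cRe u x, cIm u x)); auto.
  apply functional_extensionality; intros x; unfold cRe, cIm; destruct (u x); auto.
Qed.

Lemma nonneg_outside_dirichlet {V} (m : V -> R) b c (g : V -> R) :
  sq_summable (evec m b c g) -> ~ dirichlet m b c g -> exists f, (forall x, 0 <= f x) /\ sq_summable (evec m b c f) /\ ~ dirichlet m b c f.
Proof.
  intros Hg Hn.
  set (gp := fun x => Rmax (g x) 0). set (gm := fun x => Rmax (- g x) 0).
  assert (Sp : sq_summable (evec m b c gp)).
  { apply (evec_contraction m b c g); auto; intros; unfold gp; [apply Rmax0_abs| apply Rmax0_lip]. }
  assert (Sm : sq_summable (evec m b c gm)).
  { apply (evec_contraction m b c g); auto; intros; unfold gm.
    - eapply Rle_trans; [apply Rmax0_abs| rewrite Rabs_Ropp; lra].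
    - eapply Rle_trans; [apply Rmax0_lip|]. replace (- g x - - g y) with (- (g x - g y)) by ring. rewrite Rabs_Ropp; lra. }
  destruct (classic (dirichlet m b c gp)) as [Rp|Rp]; [|exists gp; split; [intros; apply Rmax_r|auto]].
  destruct (classic (dirichlet m b c gm)) as [Rm|Rm]; [|exists gm; split; [intros; apply Rmax_r|auto]].
  exfalso. apply Hn. apply (dirichlet_ext m b c (fminus gp gm)); [|apply dirichlet_minus; auto].
  intros x; unfold fminus, gp, gm, Rmax; repeat destruct Rle_dec; lra.
Qed.

Lemma bounded_outside_dirichlet {V} (m : V -> R) b c (f : V -> R) :
  (forall x, 0 < m x) -> (forall x, 0 <= f x) -> sq_summable (evec m b c f) -> ~ dirichlet m b c f ->
  exists g M, 0 <= M /\ (forall x, 0 <= g x <= M) /\ sq_summable (evec m b c g) /\ ~ dirichlet m b c g.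
Proof.
  intros Hm Hf0 Hf Hn.
  set (h := fun (n : nat) x => Rmin (f x) (INR n)).
  assert (Sh : forall n, sq_summable (evec m b c (h n))).
  { intros n. apply (evec_contraction m b c f); auto; intros; unfold h; [|apply Rmin_lip].
    specialize (Hf0 x). pose proof (pos_INR n). unfold Rmin; destruct Rle_dec; unfold Rabs; repeat destruct Rcase_abs; lra. }
  destruct (classic (forall n, dirichlet m b c (h n))) as [Hall|Hex].
  - exfalso. apply Hn. apply (dirichlet_closed m b c h f Hm Hall Hf).
    set (p := fun (n : nat) x => Rmax (f x - INR n) 0).
    apply (Un_cv_ext (fun n => sqnorm (evec m b c (p n)))).
    { intros n. apply sqnorm_ext_sq. intros i.
      assert (E : evec m b c (fminus (h n) f) i = - evec m b c (p n) i).
      { destruct i as [x|[x|q]]; unfold evec, qvec, wscale, grad, fminus, h, p; simpl;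
        unfold Rmin, Rmax; repeat destruct Rle_dec; try ring; lra. }
      rewrite E; ring. }
    apply (sqnorm_dominated_cv0 _ (evec m b c f)); auto.
    + intros n. apply evec_abs_le; intros; unfold p.
      * specialize (Hf0 x). pose proof (pos_INR n). unfold Rmax; destruct Rle_dec; unfold Rabs; repeat destruct Rcase_abs; lra.
      * eapply Rle_trans; [apply Rmax0_lip|]. right; f_equal; ring.
    + intros i. replace 0 with (evec m b c (fun _ => 0) i) by (destruct i as [x|[x|q]]; unfold evec, qvec, wscale, grad; simpl; ring).
      apply evec_cv. intros x. destruct (INR_unbounded (f x)) as [N HN].
      intros e He. exists N. intros n Hn'. unfold R_dist, p.
      assert (INR N <= INR n) by (apply le_INR; lia).
      unfold Rmax; destruct Rle_dec; [|lra]. rewrite Rminus_diag, Rabs_R0; auto.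
  - apply not_all_ex_not in Hex. destruct Hex as [n Hn']. exists (h n), (INR n).
    split; [apply pos_INR|]. split; [|split; auto]. intros x; unfold h. specialize (Hf0 x). pose proof (pos_INR n).
    unfold Rmin; destruct Rle_dec; lra.
Qed.

(** * First variation *)

Definition dirac {V} (x : V) : V -> R := fun y => if excluded_middle_informative (y = x) then 1 else 0.

Definition slice_fst {V} (x : V) (r : V -> R) : V * V -> R :=
  fun p => if excluded_middle_informative (fst p = x) then r (snd p) else 0.
Definition slice_snd {V} (x : V) (r : V -> R) : V * V -> R :=
  fun p => if excluded_middle_informative (snd p = x) then r (fst p) else 0.

Lemma has_sum_slice_fst {V} (x : V) r s : has_sum r s -> has_sum (slice_fst x r) s.
Proof.
  intros H. apply (has_sum_embed (fun q => (x, q))).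
  - intros a a' h; inversion h; auto.
  - intros [p q] h. unfold slice_fst; simpl. destruct excluded_middle_informative; auto. subst. exfalso; apply (h q); auto.
  - eapply has_sum_ext; [|apply H]. intros q; unfold slice_fst; simpl. destruct excluded_middle_informative; tauto.
Qed.

Lemma has_sum_slice_snd {V} (x : V) r s : has_sum r s -> has_sum (slice_snd x r) s.
Proof.
  intros H. apply (has_sum_embed (fun q => (q, x))).
  - intros a a' h; inversion h; auto.
  - intros [p q] h. unfold slice_snd; simpl. destruct excluded_middle_informative; auto. subst. exfalso; apply (h p); auto.
  - eapply has_sum_ext; [|apply H]. intros q; unfold slice_snd; simpl. destruct excluded_middle_informative; tauto.
Qed.

Definition edge_row {V} (b : V -> V -> R) (x : V) (v : V -> R) : V -> R := fun y => b x y * (v x - v y).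

Lemma grad_dirac_mult {V} (b : V -> V -> R) x (v : V -> R) :
  (forall x y, 0 <= b x y) -> (forall x y, b x y = b y x) -> (forall x, b x x = 0) ->
  forall p, grad b v p * grad b (dirac x) p = /2 * slice_fst x (edge_row b x v) p + /2 * slice_snd x (edge_row b x v) p.
Proof.
  intros Hb Hs H0 [p q]. rewrite grad_mult by auto. unfold slice_fst, slice_snd, edge_row, dirac; simpl.
  repeat destruct excluded_middle_informative; subst; try rewrite H0; try rewrite (Hs q p); try ring.
  all: try (exfalso; auto; fail). all: try field. all: rewrite (Hs _ x); field.
Qed.

Lemma grad_dirac_sum {V} (b : V -> V -> R) x (v : V -> R) :
  (forall x y, 0 <= b x y) -> (forall x y, b x y = b y x) -> (forall x, b x x = 0) ->
  summable (edge_row b x v) -> has_sum (fun p => grad b v p * grad b (dirac x) p) (tsum (edge_row b x v)).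
Proof.
  intros Hb Hs H0 Hr. pose proof (tsum_spec _ Hr) as H.
  apply (has_sum_ext (fun p => /2 * slice_fst x (edge_row b x v) p + /2 * slice_snd x (edge_row b x v) p)).
  { intros; rewrite grad_dirac_mult; auto. }
  replace (tsum (edge_row b x v)) with (/2 * tsum (edge_row b x v) + /2 * tsum (edge_row b x v)) by field.
  apply has_sum_plus; apply has_sum_scal; [apply has_sum_slice_fst|apply has_sum_slice_snd]; auto.
Qed.

Lemma wscale_dirac_sum {V} (w : V -> R) x (v : V -> R) : 0 <= w x ->
  has_sum (fun y => wscale w v y * wscale w (dirac x) y) (w x * v x).
Proof.
  intros Hw. replace (w x * v x) with (wscale w v x * wscale w (dirac x) x).
  - apply (has_sum_single (fun y => wscale w v y * wscale w (dirac x) y) x). intros y hy. unfold wscale, dirac. destruct excluded_middle_informative; [contradiction|ring].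
  - rewrite wscale_mult by auto. unfold dirac. destruct excluded_middle_informative; [ring|tauto].
Qed.

Lemma edge_row_dirac {V} (b : V -> V -> R) x : (forall x, b x x = 0) -> forall y, edge_row b x (dirac x) y = b x y.
Proof. intros H0 y. unfold edge_row, dirac. repeat destruct excluded_middle_informative; subst; try rewrite H0; try ring; tauto. Qed.

Lemma inner_evec_dirac {V} m b c x (v : V -> R) :
  (forall x, 0 <= m x) -> (forall x, 0 <= c x) ->
  (forall x y, 0 <= b x y) -> (forall x y, b x y = b y x) -> (forall x, b x x = 0) ->
  summable (fun y => b x y) -> sq_summable (evec m b c v) -> summable (edge_row b x v) ->
  sq_summable (evec m b c (dirac x)) /\ inner (evec m b c v) (evec m b c (dirac x)) = m x * v x + c x * v x + tsum (edge_row b x v).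
Proof.
  intros Hm Hc Hb Hs H0 Hrow Hv Hr.
  assert (Sd : sq_summable (evec m b c (dirac x))).
  { apply sq_summable_evec_iff; split; [|apply sq_summable_sum_iff; split].
    - exists (m x * dirac x x). apply wscale_dirac_sum; auto.
    - exists (c x * dirac x x). apply wscale_dirac_sum; auto.
    - exists (tsum (edge_row b x (dirac x))). apply grad_dirac_sum; auto.
      apply (summable_ext (fun y => b x y)); auto. intros; symmetry; apply edge_row_dirac; auto. }
  split; auto.
  rewrite (inner_sum (evec m b c v) (evec m b c (dirac x))) by auto. simpl.
  pose proof (proj2 (proj1 (sq_summable_evec_iff _ _ _ _) Hv)) as Qv.
  pose proof (proj2 (proj1 (sq_summable_evec_iff _ _ _ _) Sd)) as Qd.
  change (inner (wscale m v) (wscale m (dirac x)) + inner (qvec b c v) (qvec b c (dirac x)) = m x * v x + c x * v x + tsum (edge_row b x v)).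
  rewrite inner_qvec by auto.
  unfold inner at 1. rewrite (tsum_eq _ _ (wscale_dirac_sum m x v (Hm x))).
  unfold inner at 1. rewrite (tsum_eq _ _ (wscale_dirac_sum c x v (Hc x))).
  unfold inner. rewrite (tsum_eq _ _ (grad_dirac_sum b x v Hb Hs H0 Hr)). ring.
Qed.

Lemma inner_scal_r {I} (g h : I -> R) t : sq_summable g -> sq_summable h -> inner g (fun i => t * h i) = t * inner g h.
Proof. intros. unfold inner. rewrite (tsum_ext _ (fun i => t * (g i * h i))) by (intros; ring).
  apply tsum_scal, sq_summable_prod; auto. Qed.

Lemma inner_zero_of_minimum {I} (g h : I -> R) : sq_summable g -> sq_summable h ->
  (forall t, sqnorm g <= sqnorm (fun i => g i + t * h i)) -> inner g h = 0.
Proof.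
  intros Hg Hh H.
  assert (E : forall t, sqnorm (fun i => g i + t * h i) = sqnorm g + 2 * t * inner g h + t * t * sqnorm h).
  { intros t. rewrite sqnorm_plus by (auto; apply sq_summable_scal; auto). rewrite inner_scal_r, sqnorm_scal; auto. ring. }
  pose proof (sqnorm_nonneg h Hh) as K0.
  set (B := inner g h). set (K := sqnorm h).
  specialize (H (- B / (K + 1))). rewrite E in H. fold B K in H.
  fold K in K0. assert (Hk1 : K + 1 <> 0) by (apply Rgt_not_eq; lra).
  assert (Hp : 0 <= B * B * (- 2 * (K + 1) + K) / ((K + 1) * (K + 1))).
  { replace (B * B * (- 2 * (K + 1) + K) / ((K + 1) * (K + 1))) with (2 * (- B / (K + 1)) * B + (- B / (K + 1)) * (- B / (K + 1)) * K) by (field; auto). lra. }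
  assert (Hq : B * B * (- 2 * (K + 1) + K) <= 0).
  { pose proof (Rle_0_sqr B). unfold Rsqr in *. nra. }
  assert (Hr : 0 <= B * B * (- 2 * (K + 1) + K)).
  { apply (Rmult_le_reg_r (/ ((K + 1) * (K + 1)))). apply Rinv_0_lt_compat; nra. rewrite Rmult_0_l. unfold Rdiv in Hp. lra. }
  assert (B * B = 0) by nra. apply Rsqr_0_uniq; unfold Rsqr; auto.
Qed.

(** * Energy minimization *)

Lemma exists_inf_nonneg {X} (P : X -> Prop) (F : X -> R) : (exists x, P x) -> (forall x, P x -> 0 <= F x) ->
  exists d, (forall x, P x -> d <= F x) /\ (forall eps, eps > 0 -> exists x, P x /\ F x < d + eps).
Proof.
  intros [x0 Hx0] HF.
  set (E := fun r => exists x, P x /\ r = - F x).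
  assert (HB : bound E) by (exists 0; intros r [x [Hx ->]]; specialize (HF x Hx); lra).
  assert (HE : exists r, E r) by (exists (- F x0), x0; auto).
  destruct (completeness E HB HE) as [L [Hub Hlub]].
  exists (- L). split.
  - intros x Hx. assert (- F x <= L) by (apply Hub; exists x; auto). lra.
  - intros eps He. destruct (classic (exists x, P x /\ F x < - L + eps)) as [|Hno]; auto. exfalso.
    assert (L <= L - eps); [|lra]. apply Hlub. intros r [x [Hx ->]].
    destruct (Rle_lt_dec (- F x) (L - eps)); auto. exfalso; apply Hno; exists x; split; auto; lra.
Qed.

Lemma Un_cv_0_inv_bound (a : nat -> R) K : 0 <= K -> (forall n, 0 <= a n <= K / (INR n + 1)) -> Un_cv a 0.
Proof.
  intros HK H e He. destruct (INR_unbounded (K / e)) as [N HN]. exists N. intros n Hn.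
  specialize (H n). unfold R_dist. rewrite Rminus_0_r, Rabs_right by lra.
  assert (INR N <= INR n) by (apply le_INR; lia). pose proof (pos_INR N).
  assert (K / (INR n + 1) < e); [|lra].
  assert (HK2 : K < e * (INR n + 1)). { assert (e * (K / e) = K) by (field; lra).
    assert (e * INR N > e * (K / e)) by (apply Rmult_gt_compat_l; auto).
    assert (e * INR N <= e * INR n) by (apply Rmult_le_compat_l; lra). lra. }
  apply (Rmult_lt_reg_r (INR n + 1)); [lra|].
  replace (K / (INR n + 1) * (INR n + 1)) with K by (field; lra). lra.
Qed.

Lemma Un_cv_0_sq_bound (a : nat -> R) K : 0 <= K -> (forall n, a n * a n <= K / (INR n + 1)) -> Un_cv a 0.
Proof.
  intros HK H. assert (H2 : Un_cv (fun n => a n * a n) 0).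
  { apply (Un_cv_0_inv_bound _ K HK). intros n; split; [nra|auto]. }
  intros e He. destruct (H2 (e*e)) as [N HN]; [nra|]. exists N. intros n Hn. specialize (HN n Hn).
  unfold R_dist in *. rewrite Rminus_0_r in *. 
  rewrite Rabs_right in HN by nra. pose proof (Rabs_pos (a n)). rewrite (sq_abs (a n)) in HN. nra.
Qed.

Lemma Un_cv_ge (u : nat -> R) L d : Un_cv u L -> (forall n, d <= u n) -> d <= L.
Proof.
  intros H Hd. destruct (Rle_lt_dec d L) as [|Hl]; auto. exfalso.
  destruct (H (d - L)) as [N HN]; [lra|]. specialize (HN N (le_n _)). specialize (Hd N).
  unfold R_dist in HN. apply Rabs_def2 in HN. lra.
Qed.

Lemma sqnorm_parallelogram {I} (g h : I -> R) : sq_summable g -> sq_summable h ->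
  sqnorm (fun i => g i - h i) = 2 * sqnorm g + 2 * sqnorm h - 4 * sqnorm (fun i => (g i + h i) / 2).
Proof.
  intros Hg Hh. rewrite (sqnorm_ext (fun i => (g i + h i) / 2) (fun i => /2 * (g i + h i))) by (intros; unfold Rdiv; ring).
  rewrite sqnorm_scal by (apply sq_summable_plus; auto). rewrite sqnorm_plus, sqnorm_minus by auto. field.
Qed.

Definition clamp (M t : R) : R := Rmin (Rmax t 0) M.
Lemma clamp_lip M a b : Rabs (clamp M a - clamp M b) <= Rabs (a - b).
Proof. unfold clamp, Rmin, Rmax; repeat destruct Rle_dec; unfold Rabs; repeat destruct Rcase_abs; lra. Qed.
Lemma clamp_abs M a : 0 <= M -> Rabs (clamp M a) <= Rabs a.
Proof. intros. unfold clamp, Rmin, Rmax; repeat destruct Rle_dec; unfold Rabs; repeat destruct Rcase_abs; lra. Qed.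
Lemma clamp_id M a : 0 <= a <= M -> clamp M a = a.
Proof. intros. unfold clamp, Rmin, Rmax; repeat destruct Rle_dec; lra. Qed.
Lemma clamp_range M a : 0 <= M -> 0 <= clamp M a <= M.
Proof. intros. unfold clamp, Rmin, Rmax; repeat destruct Rle_dec; lra. Qed.

Lemma inv_INR_succ_le (n N : nat) : (n >= N)%nat -> / (INR n + 1) <= / (INR N + 1).
Proof. intros H. apply Rinv_le_contravar; [pose proof (pos_INR N); lra| apply Rplus_le_compat_r, le_INR; lia]. Qed.

Lemma four_inv_succ_lt e (N : nat) : e > 0 -> INR N > 4 / e -> 4 * / (INR N + 1) < e.
Proof. intros He H. pose proof (pos_INR N).
  assert (4 < e * (INR N + 1)). { assert (e * (4 / e) = 4) by (field; lra).
    assert (e * INR N > e * (4 / e)) by (apply Rmult_gt_compat_l; auto). lra. }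
  apply (Rmult_lt_reg_r (INR N + 1)); [lra|]. rewrite Rmult_assoc, Rinv_l by lra. lra. Qed.

Lemma Rabs_lt_of_weighted_sq_le (mx e D : R) (n k N : nat) : mx > 0 -> e > 0 -> (n >= N)%nat -> (k >= N)%nat ->
  INR N > 4 / (mx * (e * e)) -> mx * (D * D) <= 2 * / (INR n + 1) + 2 * / (INR k + 1) -> Rabs D < e.
Proof.
  intros Hmx He Hn Hk HN HD. pose proof (inv_INR_succ_le n N Hn). pose proof (inv_INR_succ_le k N Hk).
  assert (Hp : mx * (e * e) > 0) by (apply Rmult_gt_0_compat; nra).
  assert (H4 : 4 * / (INR N + 1) < mx * (e * e)) by (apply four_inv_succ_lt; auto).
  assert (D * D < e * e). { apply (Rmult_lt_reg_l mx); auto. lra. }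
  rewrite (sq_abs D) in H1. pose proof (Rabs_pos D). nra.
Qed.

Definition admissible {V} m b c (f w : V -> R) := sq_summable (evec m b c w) /\ finsupp_real (fminus w f).

Lemma admissible_mid {V} m b c (f a a' : V -> R) : admissible m b c f a -> admissible m b c f a' -> admissible m b c f (fun x => (a x + a' x) / 2).
Proof.
  intros [H1 [l1 L1]] [H2 [l2 L2]]. split.
  - apply (sq_summable_ext (fun i => /2 * (evec m b c a i + evec m b c a' i))).
    { intros [x|[x|p]]; unfold evec, qvec, wscale, grad; simpl; field. }
    apply sq_summable_scal, sq_summable_plus; auto.
  - exists (l1 ++ l2). intros x hx. apply in_or_app. unfold fminus in *.
    destruct (Req_dec (a x - f x) 0) as [e1|e1]; [|left; auto].
    destruct (Req_dec (a' x - f x) 0) as [e2|e2]; [|right; auto]. exfalso; apply hx. lra.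
Qed.

Lemma admissible_clamp {V} m b c (f a : V -> R) M : 0 <= M -> (forall x, 0 <= f x <= M) ->
  admissible m b c f a -> admissible m b c f (fun x => clamp M (a x)).
Proof.
  intros HM Hf [H1 [l L]]. split.
  - apply (evec_contraction m b c a); auto; intros; [apply clamp_abs; auto| apply clamp_lip].
  - exists l. intros x hx. apply L. unfold fminus in *. intro h. apply hx.
    replace (a x) with (f x) by lra. rewrite clamp_id; auto. ring.
Qed.

Lemma admissible_add {V} m b c (f a psi : V -> R) : admissible m b c f a -> finsupp_real psi -> sq_summable (evec m b c psi) ->
  admissible m b c f (fplus a psi).
Proof.
  intros [H1 [l1 L1]] [l2 L2] H2. split; [apply sq_summable_evec_plus; auto|].
  exists (l1 ++ l2). intros x hx. apply in_or_app. unfold fminus, fplus in *.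
  destruct (Req_dec (a x - f x) 0) as [e1|e1]; [|left; auto].
  destruct (Req_dec (psi x) 0) as [e2|e2]; [|right; auto]. exfalso; apply hx. lra.
Qed.

Lemma evec_pointwise_le {V} m b c (g : V -> R) x : 0 <= m x -> sq_summable (evec m b c g) ->
  m x * (g x * g x) <= sqnorm (evec m b c g).
Proof.
  intros Hmx Hg. eapply Rle_trans; [|apply (sqnorm_wscale_le m b c); auto].
  rewrite <- wscale_mult by auto. apply sqnorm_ge_term, (sq_summable_wscale m b c); auto.
Qed.

Section Minimizer.

Variables (V : Type) (m : V -> R) (b : V -> V -> R) (c : V -> R) (f : V -> R) (M : R).
Hypothesis Hm : forall x, 0 < m x.
Hypothesis HM : 0 <= M.
Hypothesis Hf : forall x, 0 <= f x <= M.

Variable d : R.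
Hypothesis Hd : forall a, admissible m b c f a -> d <= sqnorm (evec m b c a).

(* The midpoint of two admissible functions is admissible, hence has energy at least [d]. *)
Lemma admissible_dist_le a a' e1 e2 :
  admissible m b c f a -> admissible m b c f a' ->
  sqnorm (evec m b c a) <= d + e1 -> sqnorm (evec m b c a') <= d + e2 ->
  sqnorm (evec m b c (fminus a a')) <= 2 * e1 + 2 * e2.
Proof.
  intros Ha Ha' h1 h2.
  rewrite (sqnorm_ext _ (fun i => evec m b c a i - evec m b c a' i)) by (intros; apply evec_minus).
  rewrite sqnorm_parallelogram by (first [apply Ha | apply Ha']).
  assert (d <= sqnorm (fun i => (evec m b c a i + evec m b c a' i) / 2)).
  { rewrite (sqnorm_ext _ (evec m b c (fun x => (a x + a' x) / 2))).
    - apply Hd, admissible_mid; auto.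
    - intros [x|[x|p]]; unfold evec, qvec, wscale, grad; simpl; field. }
  lra.
Qed.

Variable w : nat -> V -> R.
Hypothesis Hw : forall n, admissible m b c f (w n) /\ sqnorm (evec m b c (w n)) < d + / (INR n + 1).

Lemma minimizing_sq_summable n : sq_summable (evec m b c (w n)).
Proof. apply Hw. Qed.

Lemma minimizing_dist_sq_summable n k : sq_summable (evec m b c (fminus (w n) (w k))).
Proof. apply sq_summable_evec_minus; apply minimizing_sq_summable. Qed.

Lemma minimizing_dist_le n k :
  sqnorm (evec m b c (fminus (w n) (w k))) <= 2 * / (INR n + 1) + 2 * / (INR k + 1).
Proof. apply admissible_dist_le; try apply Hw; left; apply Hw. Qed.

Lemma minimizing_pointwise_cauchy x : Cauchy_crit (fun n => w n x).
Proof.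
  intros e He.
  destruct (INR_unbounded (4 / (m x * (e * e)))) as [N HN].
  exists N. intros n k Hn Hk. unfold R_dist. apply (Rabs_lt_of_weighted_sq_le (m x) e _ n k N); auto; [apply Hm|].
  eapply Rle_trans; [apply (evec_pointwise_le m b c (fminus (w n) (w k)))|apply minimizing_dist_le].
  - left; apply Hm.
  - apply minimizing_dist_sq_summable.
Qed.

Variable v : V -> R.
Hypothesis Hv : forall x, Un_cv (fun n => w n x) (v x).

Lemma limit_dist_le n : sq_summable (evec m b c (fminus v (w n))) /\
  sqnorm (evec m b c (fminus v (w n))) <= 4 * / (INR n + 1).
Proof.
  apply (sqnorm_fatou (fun k => evec m b c (fminus (w k) (w n))) _ n).
  - apply evec_cv. intros x. unfold fminus. apply CV_minus; [apply Hv| apply Un_cv_const].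
  - intros k Hk. split; [apply minimizing_dist_sq_summable|].
    eapply Rle_trans; [apply minimizing_dist_le|].
    pose proof (inv_INR_succ_le k n Hk). lra.
Qed.

Lemma limit_sq_summable : sq_summable (evec m b c v).
Proof.
  apply (sq_summable_ext (evec m b c (fplus (fminus v (w 0%nat)) (w 0%nat))));
    [intros [x|[x|p]]; unfold evec, qvec, wscale, grad, fplus, fminus; simpl; ring|].
  apply sq_summable_evec_plus; [apply limit_dist_le| apply minimizing_sq_summable].
Qed.

Lemma minimizing_cv : Un_cv (fun n => sqnorm (evec m b c (fminus (w n) v))) 0.
Proof.
  apply (Un_cv_0_inv_bound _ 4); [lra|]. intros n. destruct (limit_dist_le n) as [h1 h2].
  rewrite (sqnorm_ext_sq _ (evec m b c (fminus v (w n)))) by (intros i; rewrite !evec_minus; ring).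
  split; [apply sqnorm_nonneg; auto| unfold Rdiv; lra].
Qed.

Lemma minimizing_clamp_dist_le n :
  sqnorm (evec m b c (fminus (w n) (fun y => clamp M (w n y)))) <= 4 * / (INR n + 1).
Proof.
  destruct (Hw n) as [Ha Hlt].
  assert (Ac : admissible m b c f (fun y => clamp M (w n y))) by (apply admissible_clamp; auto).
  assert (sqnorm (evec m b c (fun y => clamp M (w n y))) <= sqnorm (evec m b c (w n))).
  { apply (evec_contraction m b c (w n)); [intros; apply clamp_abs; auto| intros; apply clamp_lip| apply Ha]. }
  eapply Rle_trans; [apply (admissible_dist_le _ _ (/ (INR n + 1)) (/ (INR n + 1))); auto; lra| lra].
Qed.

(* Clamping to [0, M] keeps admissibility and does not increase the energy, so a minimizing
   sequence is asymptotically unchanged by it. *)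
Lemma limit_range x : 0 <= v x <= M.
Proof.
  assert (Hz : Un_cv (fun n => w n x - clamp M (w n x)) 0).
  { apply (Un_cv_0_sq_bound _ (4 / m x)).
    { unfold Rdiv; apply Rmult_le_pos; [lra| left; apply Rinv_0_lt_compat; auto]. }
    intros n. pose proof (Hm x) as Hmx.
    assert (Hss : sq_summable (evec m b c (fminus (w n) (fun y => clamp M (w n y))))).
    { apply sq_summable_evec_minus; [apply minimizing_sq_summable|].
      apply (admissible_clamp m b c f (w n) M); auto; apply Hw. }
    pose proof (evec_pointwise_le m b c _ x (Rlt_le _ _ Hmx) Hss) as Hpt.
    pose proof (minimizing_clamp_dist_le n).
    change (fminus (w n) (fun y => clamp M (w n y)) x) with (w n x - clamp M (w n x)) in Hpt.
    apply (Rmult_le_reg_l (m x)); auto.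
    replace (m x * (4 / m x / (INR n + 1))) with (4 * / (INR n + 1) * (m x * / m x)) by (unfold Rdiv; ring).
    rewrite Rinv_r by (apply Rgt_not_eq; lra). lra. }
  assert (Hz2 : Un_cv (fun n => w n x - clamp M (w n x)) (v x - clamp M (v x))).
  { apply CV_minus; [apply Hv|]. intros e He. destruct (Hv x e He) as [N HN]. exists N. intros n Hn.
    unfold R_dist in *. eapply Rle_lt_trans; [apply clamp_lip| apply HN; auto]. }
  pose proof (UL_sequence _ _ _ Hz2 Hz).
  pose proof (clamp_range M (v x) HM). lra.
Qed.

Lemma limit_energy : sqnorm (evec m b c v) = d.
Proof.
  assert (C1 : Un_cv (fun n => sqnorm (evec m b c (w n))) (sqnorm (evec m b c v))).
  { apply sqnorm_cv; [apply limit_sq_summable| apply minimizing_sq_summable|].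
    eapply Un_cv_ext; [|apply minimizing_cv]. intros n; apply sqnorm_ext; intros; apply evec_minus. }
  assert (C2 : Un_cv (fun n => sqnorm (evec m b c (w n))) d).
  { assert (D : Un_cv (fun n => sqnorm (evec m b c (w n)) - d) 0).
    { apply (Un_cv_0_inv_bound _ 1); [lra|]. intros n. destruct (Hw n) as [Ha Hlt]. pose proof (Hd _ Ha).
      unfold Rdiv; lra. }
    apply (Un_cv_ext (fun n => (sqnorm (evec m b c (w n)) - d) + d)); [intros; ring|].
    pose proof (CV_plus _ _ _ _ D (Un_cv_const d)) as HH. rewrite Rplus_0_l in HH. exact HH. }
  apply (UL_sequence _ _ _ C1 C2).
Qed.

Lemma limit_minimal psi : finsupp_real psi -> sq_summable (evec m b c psi) ->
  sqnorm (evec m b c v) <= sqnorm (evec m b c (fplus v psi)).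
Proof.
  intros Hp Hps. rewrite limit_energy.
  apply (Un_cv_ge (fun n => sqnorm (evec m b c (fplus (w n) psi)))).
  - apply sqnorm_cv; [apply sq_summable_evec_plus; auto; apply limit_sq_summable|
      intros; apply sq_summable_evec_plus; auto; apply minimizing_sq_summable|].
    eapply Un_cv_ext; [|apply minimizing_cv]. intros n; apply sqnorm_ext; intros i; rewrite !evec_plus, evec_minus; ring.
  - intros n. apply Hd. apply admissible_add; auto; apply Hw.
Qed.

Lemma limit_nonzero : sq_summable (evec m b c f) -> ~ dirichlet m b c f -> exists x, v x <> 0.
Proof.
  intros HTf HnD. destruct (classic (exists x, v x <> 0)) as [|Hno]; auto. exfalso. apply HnD.
  assert (Hv0 : forall x, v x = 0) by (intros x; destruct (Req_dec (v x) 0); auto; exfalso; apply Hno; eauto).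
  pose proof limit_sq_summable as HTv.
  split; [apply (sq_summable_wscale m b c); auto|].
  exists (fun n => fminus f (w n)). split; [|split].
  - intros n. destruct (Hw n) as [[Ha [l Hl]] _]. split.
    + exists l. intros x hx. apply Hl. unfold fminus in *. intro h; apply hx; lra.
    + apply sq_summable_evec_minus; auto; apply minimizing_sq_summable.
  - apply (Un_cv_0_squeeze _ (fun n => sqnorm (evec m b c (fminus (w n) v)))); [|apply minimizing_cv].
    intros n. assert (Hs1 : sq_summable (evec m b c (fminus (w n) v)))
      by (apply sq_summable_evec_minus; auto; apply minimizing_sq_summable).
    rewrite (sqnorm_ext_sq _ (wscale m (fminus (w n) v))) by (intros y; unfold wscale, fminus; rewrite Hv0; ring).
    split; [apply sqnorm_nonneg; apply (sq_summable_wscale m b c); auto| apply sqnorm_wscale_le; auto].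
  - intros eps He. destruct (INR_unbounded (4 / eps)) as [N HN]. exists N. intros n k Hn Hk.
    rewrite (sqnorm_ext_sq _ (qvec b c (fminus (w n) (w k))))
      by (intros [y|p]; unfold qvec, wscale, grad, fminus; simpl; ring).
    eapply Rle_lt_trans; [apply (sqnorm_qvec_le m); apply minimizing_dist_sq_summable|].
    eapply Rle_lt_trans; [apply minimizing_dist_le|].
    pose proof (inv_INR_succ_le n N Hn). pose proof (inv_INR_succ_le k N Hk). pose proof (four_inv_succ_lt eps N He HN). lra.
Qed.

Hypothesis Hb : forall x y, 0 <= b x y.
Hypothesis Hbsym : forall x y, b x y = b y x.
Hypothesis Hb0 : forall x, b x x = 0.
Hypothesis Hrow : forall x, summable (fun y => b x y).
Hypothesis Hc : forall x, 0 <= c x.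

(* [v] minimizes the energy on [v + C_c(V)]; its derivative along [dirac x] is the equation at [x]. *)
Lemma limit_harmonic x :
  summable (edge_row b x v) /\ m x * v x + c x * v x + tsum (edge_row b x v) = 0.
Proof.
  assert (Hm0 : forall x, 0 <= m x) by (intros y; specialize (Hm y); lra).
  pose proof limit_sq_summable as HTv.
  assert (Hr : summable (edge_row b x v)).
  { apply (summable_abs_compare _ (fun y => M * b x y)); [|apply summable_scal; auto].
    intros y. unfold edge_row. rewrite Rabs_mult, (Rabs_right (b x y)) by (apply Rle_ge; auto).
    pose proof (limit_range x); pose proof (limit_range y). rewrite (Rmult_comm M).
    apply Rmult_le_compat_l; auto. unfold Rabs; destruct Rcase_abs; lra. }
  destruct (inner_evec_dirac m b c x v Hm0 Hc Hb Hbsym Hb0 (Hrow x) HTv Hr) as [Sd HB].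
  split; auto. rewrite <- HB. apply inner_zero_of_minimum; auto.
  intros t.
  rewrite (sqnorm_ext (fun i => evec m b c v i + t * evec m b c (dirac x) i) (evec m b c (fplus v (fscal t (dirac x)))))
    by (intros i; rewrite evec_plus, evec_scal; auto).
  apply limit_minimal; [| apply sq_summable_evec_scal; auto].
  exists [x]. intros y hy. unfold fscal, dirac in hy.
  destruct excluded_middle_informative; [left; auto| exfalso; apply hy; ring].
Qed.

End Minimizer.

Lemma harmonic_minimizer {V} m b c (f : V -> R) M :
  (forall x, 0 < m x) -> (forall x y, 0 <= b x y) -> (forall x y, b x y = b y x) -> (forall x, b x x = 0) ->
  (forall x, summable (fun y => b x y)) -> (forall x, 0 <= c x) -> 0 <= M ->
  (forall x, 0 <= f x <= M) -> sq_summable (evec m b c f) -> ~ dirichlet m b c f ->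
  exists v, (forall x, 0 <= v x <= M) /\ sq_summable (evec m b c v) /\ (exists x, v x <> 0) /\
    (forall x, summable (edge_row b x v) /\ m x * v x + c x * v x + tsum (edge_row b x v) = 0).
Proof.
  intros Hm Hb Hs H0 Hrow Hc HM Hf HTf HnD.
  destruct (exists_inf_nonneg (admissible m b c f) (fun w => sqnorm (evec m b c w))) as [d [Hd1 Hd2]].
  { exists f. split; auto. exists []. intros x h; exfalso; apply h; unfold fminus; ring. }
  { intros w [Hw _]. apply sqnorm_nonneg; auto. }
  assert (Hw : forall n, exists w, admissible m b c f w /\ sqnorm (evec m b c w) < d + / (INR n + 1)).
  { intros n; apply Hd2; apply Rinv_0_lt_compat; pose proof (pos_INR n); lra. }
  destruct (choice _ Hw) as [w Hwp].
  assert (Hcc : forall x, Cauchy_crit (fun n => w n x))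
    by (intros x; eapply minimizing_pointwise_cauchy; eauto).
  set (v := fun x => proj1_sig (R_complete _ (Hcc x))).
  assert (Hv : forall x, Un_cv (fun n => w n x) (v x)) by (intros x; exact (proj2_sig (R_complete _ (Hcc x)))).
  exists v. split; [|split; [|split]].
  - eapply limit_range; eauto.
  - eapply limit_sq_summable; eauto.
  - eapply limit_nonzero; eauto.
  - intros x. eapply limit_harmonic; eauto.
Qed.
Lemma tsum_zero {T} : tsum (fun _ : T => 0) = 0.
Proof.
  apply tsum_eq. intros e He. exists []. intros l _ _.
  replace (sum_list (fun _ : T => 0) l) with 0 by (induction l; simpl; auto; rewrite <- IHl; ring).
  rewrite Rminus_0_r, Rabs_R0; auto.
Qed.

Lemma QN_dom_real {V} (m : V -> R) b c (v : V -> R) :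
  (forall x, 0 <= m x) -> (forall x y, 0 <= b x y) -> (forall x, 0 <= c x) ->
  sq_summable (evec m b c v) -> QN_dom m b c (fun x => Cof (v x)).
Proof.
  intros Hm Hb Hc Hv. apply QN_dom_iff; auto. split; [exact Hv|].
  apply (sqnorm_zero (evec m b c (fun _ => 0))).
  intros [x|[x|p]]; unfold evec, qvec, wscale, grad; simpl; ring.
Qed.

Lemma linfty_real_bounded {V} (v : V -> R) M : (forall x, 0 <= v x <= M) -> linfty (fun x => Cof (v x)).
Proof. intros Hv. exists (M * M). intros x. unfold Cnorm2, Cof; simpl. specialize (Hv x). nra. Qed.

Lemma Ftilde_real_bounded {V} (b : V -> V -> R) (v : V -> R) M :
  (forall x y, 0 <= b x y) -> (forall x, summable (fun y => b x y)) -> (forall x, 0 <= v x <= M) ->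
  Ftilde b (fun x => Cof (v x)).
Proof.
  intros Hb Hrow Hv x. unfold abs_summableC.
  apply (summable_compare _ (fun y => M * b x y)); [|apply summable_scal; auto].
  intros y. replace (Cnorm2 (Cscal (b x y) (Cof (v y)))) with ((b x y * v y) * (b x y * v y))
    by (unfold Cnorm2, Cscal, Cof; simpl; ring).
  specialize (Hv y). specialize (Hb x y).
  rewrite sqrt_square by nra. split; [nra|]. rewrite Rmult_comm. apply Rmult_le_compat_r; lra.
Qed.

Lemma Ltilde_real {V} (m : V -> R) b c (v : V -> R) x : 0 < m x ->
  m x * v x + c x * v x + tsum (edge_row b x v) = 0 ->
  Cadd (Ltilde m b c (fun y => Cof (v y)) x) (Cof (v x)) = C0.
Proof.
  intros Hmx Heq. unfold Ltilde, Cadd, Cscal, tsumC, Csub, Cof, C0; simpl. f_equal.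
  - change (tsum (fun y => b x y * (v x - v y))) with (tsum (edge_row b x v)).
    replace (tsum (edge_row b x v)) with (- (m x * v x + c x * v x)) by lra. field; lra.
  - rewrite (tsum_ext _ (fun _ => 0)) by (intros; ring). rewrite tsum_zero. ring.
Qed.

Theorem mainTheorem7 (V : Type) (m : V -> R) (b : V -> V -> R) (c : V -> R)
  (Hm : measure_space m) (Hg : is_graph b c)
  (Hne : ~ form_eq (QN m b c) (QD m b c)) :
  exists u : V -> R,
    (forall x, 0 <= u x) /\
    QN_dom m b c (fun x => Cof (u x)) /\
    linfty (fun x => Cof (u x)) /\
    (exists x, u x <> 0) /\
    Ftilde b (fun x => Cof (u x)) /\
    (forall x, Cadd (Ltilde m b c (fun y => Cof (u y)) x) (Cof (u x)) = C0).
Proof.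
  destruct Hm as [_ Hm]. destruct Hg as [Hc [Hb [H0 [Hs Hrow]]]].
  assert (Hm0 : forall x, 0 <= m x) by (intros x; specialize (Hm x); lra).
  destruct (real_outside_dirichlet m b c Hm Hb Hc Hne) as [g [Hg1 Hg2]].
  destruct (nonneg_outside_dirichlet m b c g Hg1 Hg2) as [f [Hf0 [Hf1 Hf2]]].
  destruct (bounded_outside_dirichlet m b c f Hm Hf0 Hf1 Hf2) as [f' [M [HM [HfM [HTf' Hf'D]]]]].
  destruct (harmonic_minimizer m b c f' M Hm Hb Hs H0 Hrow Hc HM HfM HTf' Hf'D)
    as [v [Hv1 [Hv2 [Hv3 Hv4]]]].
  exists v. split; [|split; [|split; [|split; [|split]]]].
  - intros x; apply Hv1.
  - apply QN_dom_real; auto.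
  - apply (linfty_real_bounded v M Hv1).
  - exact Hv3.
  - apply (Ftilde_real_bounded b v M); auto.
  - intros x. apply Ltilde_real; [apply Hm| apply Hv4].
Qed.
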